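(* Let Assumption (H0) hold and consider the sequences $x_t^k$ and $\mathcal{Q}_t^k$ generated by REDDP, where $\lambda_{T,k}=0$ for every $k\ge1$ and $\lim_{k\to+\infty}\lambda_{t,k}=0$ for $t=1,\ldots,T-1$. Then $\mathcal{Q}_{T+1}(x_T^k)=\mathcal{Q}_{T+1}^k(x_T^k)$, $\mathcal{Q}_T(x_{T-1}^k)=\mathcal{Q}_T^k(x_{T-1}^k)=\underline{\mathcal{Q}}_T^k(x_{T-1}^k)$ for all $k$, and for $t=2,\ldots,T-1$, $$\lim_{k\to+\infty}\big(\mathcal{Q}_t(x_{t-1}^k)-\mathcal{Q}_t^k(x_{t-1}^k)\big)=\lim_{k\to+\infty}\big(\mathcal{Q}_t(x_{t-1}^k)-\underline{\mathcal{Q}}_t^k(x_{t-1}^k)\big)=0.$$ Moreover, (i) $\lim_{k\to+\infty}\underline{\mathcal{Q}}_1^k(x_0)=\lim_{k\to+\infty}\bar F_1^{k-1}(x_0,x_1^k,x_1^{P,k})=\mathcal{Q}_1(x_0)$, the optimal value of the problem; and (ii) every accumulation point $(x_1^*,\ldots,x_T^* )$ of the sequence $(x_1^k,\ldots,x_T^k)_k$ is an optimal solution of the problem $\min\sum_{t=1}^Tf_t(x_{t-1},x_t)$ s.t. $x_t\in X_t(x_{t-1})$, $t=1,\ldots,T$.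
   Context: Fix integers $T\ge 1$, $n,p,q\ge 1$ and $x_0\in\mathbb{R}^n$; set $\mathcal{X}_0:=\{x_0\}$. For $t=1,\ldots,T$ let $\mathcal{X}_t\subset\mathbb{R}^n$, $f_t:\mathbb{R}^n\times\mathbb{R}^n\to\mathbb{R}\cup\{+\infty\}$, $g_t=(g_{t,1},\ldots,g_{t,p}):\mathbb{R}^n\times\mathbb{R}^n\to\mathbb{R}^p$, $q\times n$ matrices $A_t,B_t$ and $b_t\in\mathbb{R}^q$. Define $X_t(x_{t-1})=\{x_t\in\mathcal{X}_t: A_tx_t+B_tx_{t-1}=b_t,\ g_t(x_{t-1},x_t)\le 0\}$; the problem is $\min\sum_{t=1}^Tf_t(x_{t-1},x_t)$ s.t. $x_t\in X_t(x_{t-1})$. Define $\mathcal{Q}_{T+1}\equiv0$ and for $t=T,\ldots,1$, $\mathcal{Q}_t(x_{t-1})=\inf\{f_t(x_{t-1},x_t)+\mathcal{Q}_{t+1}(x_t):x_t\in X_t(x_{t-1})\}$. For $\varepsilon>0$, $\mathcal{X}^\varepsilon:=\mathcal{X}+\varepsilon\mathbb{B}_n$, $\mathbb{B}_n$ the closed Euclidean unit ball. Assumption (H0): for $t=1,\ldots,T$: (a) $\mathcal{X}_t$ nonempty, convex, compact; (b) $f_t$ proper, convex, lower semicontinuous; (c) each $g_{t,i}$ convex and lower semicontinuous; (d) there is $\varepsilon>0$ with $\mathcal{X}_{t-1}^\varepsilon\times\mathcal{X}_t\subset\mathrm{dom}(f_t)$ and for every $x_{t-1}\in\mathcal{X}_{t-1}^\varepsilon$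 there is $x_t\in\mathcal{X}_t$ with $g_t(x_{t-1},x_t)\le0$, $A_tx_t+B_tx_{t-1}=b_t$; (e) if $t\ge2$, there exists $(\bar x_{t,t-1},\bar x_{t,t})\in(\mathcal{X}_{t-1}\times\mathrm{ri}(\mathcal{X}_t))\cap\mathrm{ri}(\{(y,x):g_t(y,x)\le0\})$ with $\bar x_{t,t}\in\mathcal{X}_t$, $g_t(\bar x_{t,t-1},\bar x_{t,t})\le0$, $A_t\bar x_{t,t}+B_t\bar x_{t,t-1}=b_t$. REDDP algorithm: initial functions $\mathcal{Q}_t^0:\mathcal{X}_{t-1}\to\mathbb{R}\cup\{-\infty\}$, $t=2,\ldots,T$, with $\mathcal{Q}_t^0\le\mathcal{Q}_t$ (e.g. $\mathcal{Q}_t^0\equiv-\infty$); $\mathcal{Q}_{T+1}^k\equiv0$ for all $k\ge0$. Given nonnegative penalization parameters $\lambda_{t,k}$ with $\lambda_{t,1}=0$ and $\lambda_{T,k}=0$, and arbitrary prox-centers $x_t^{P,k}\in\mathcal{X}_t$. At iteration $k=1,2,\ldots$: Forward pass: $x_0^k=x_0$ and for $t=1,\ldots,T$, $x_t^k\in\arg\min\{\bar F_t^{k-1}(x_{t-1}^k,x_t,x_t^{P,k}): x_t\in X_t(x_{t-1}^k)\}$, where $\bar F_t^{k-1}(x_{t-1},x_t,x^P)=f_t(x_{t-1},x_t)+\mathcal{Q}_{t+1}^{k-1}(x_t)+\lambda_{t,k}\|x_t-x^P\|^2$. Backward pass: for $t=T,\ldots,2$, with $\underline{\mathcal{Q}}_t^k(y):=\inf\{f_t(y,x_t)+\mathcal{Q}_{t+1}^k(x_t):x_t\in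 X_t(y)\}$, take $\beta_t^k\in\partial\underline{\mathcal{Q}}_t^k(x_{t-1}^k)$, form $\mathcal{C}_t^k(y)=\underline{\mathcal{Q}}_t^k(x_{t-1}^k)+\langle\beta_t^k,y-x_{t-1}^k\rangle$ and set $\mathcal{Q}_t^k=\max\{\mathcal{Q}_t^{k-1},\mathcal{C}_t^k\}$. Also $\underline{\mathcal{Q}}_1^k(x_0):=\inf\{f_1(x_0,x_1)+\mathcal{Q}_2^k(x_1):x_1\in X_1(x_0)\}$. *)

From Stdlib Require Import Reals Lra Lia List.
Open Scope R_scope.

Inductive Rbar : Type := Finite (r : R) | p_infty | m_infty.

Definition Rbar_le (x y : Rbar) : Prop :=
  match x, y with
  | m_infty, _ => True
  | _, p_infty => True
  | Finite a, Finite b => a <= b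
  | _, _ => False
  end.

Definition Rbar_lt (x y : Rbar) : Prop := Rbar_le x y /\ x <> y.

(* Convention: (+oo) + (-oo) = +oo (never used in relevant places). *)
Definition Rbar_plus (x y : Rbar) : Rbar :=
  match x, y with
  | p_infty, _ => p_infty
  | _, p_infty => p_infty
  | Finite a, Finite b => Finite (a + b)
  | _, _ => m_infty
  end.

(* scaling by a positive real *)
Definition Rbar_pscal (c : R) (x : Rbar) : Rbar :=
  match x with Finite a => Finite (c * a) | y => y end.

Definition Rbar_max (x y : Rbar) : Rbar :=
  match x, y with
  | p_infty, _ => p_infty
  | _, p_infty => p_infty
  | m_infty, y => y
  | x, m_infty => x
  | Finite a, Finite b => Finite (Rmax a b)
  end.

Definition Rbar_is_inf (S : Rbar -> Prop) (v : Rbar) : Prop :=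
  (forall w, S w -> Rbar_le v w) /\
  (forall u, (forall w, S w -> Rbar_le u w) -> Rbar_le u v).

Definition Rbar_cv (u : nat -> Rbar) (l : Rbar) : Prop :=
  match l with
  | Finite r => forall eps, eps > 0 -> exists N, forall k, (N <= k)%nat ->
                  exists a, u k = Finite a /\ Rabs (a - r) < eps
  | p_infty => forall M, exists N, forall k, (N <= k)%nat -> Rbar_lt (Finite M) (u k)
  | m_infty => forall M, exists N, forall k, (N <= k)%nat -> Rbar_lt (u k) (Finite M)
  end.

Definition Rbar_diff_cv0 (u v : nat -> Rbar) : Prop :=
  forall eps, eps > 0 -> exists N, forall k, (N <= k)%nat ->
    exists a b, u k = Finite a /\ v k = Finite b /\ Rabs (a - b) < eps.

Fixpoint rsum (k : nat) (h : nat -> R) : R :=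
  match k with O => 0 | S k' => rsum k' h + h k' end.

Record vec (m : nat) : Type := mkvec {
  vf :> nat -> R ;
  vsupp : forall i, (m <= i)%nat -> vf i = 0 }.
Arguments mkvec {m} _ _.
Arguments vf {m} _ _.
Arguments vsupp {m} _ _ _.

Definition vzero {m} : vec m.
Proof. refine (mkvec (fun _ => 0) _). intros; reflexivity. Defined.

Definition vadd {m} (u v : vec m) : vec m.
Proof.
  refine (mkvec (fun i => u i + v i) _).
  intros i Hi. rewrite (vsupp u i Hi), (vsupp v i Hi). ring.
Defined.

Definition vscal {m} (c : R) (u : vec m) : vec m.
Proof.
  refine (mkvec (fun i => c * u i) _).
  intros i Hi. rewrite (vsupp u i Hi). ring.
Defined.

Definition vsub {m} (u v : vec m) : vec m := vadd u (vscal (-1) v).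

Definition vinner {m} (u v : vec m) : R := rsum m (fun i => u i * v i).

Definition vnorm {m} (u : vec m) : R := sqrt (vinner u u).

Definition vleft {m} (z : vec (m + m)) : vec m.
Proof.
  refine (mkvec (fun i => if Nat.ltb i m then z i else 0) _).
  intros i Hi. destruct (Nat.ltb_spec i m); [lia | reflexivity].
Defined.

Definition vright {m} (z : vec (m + m)) : vec m.
Proof.
  refine (mkvec (fun i => if Nat.ltb i m then z (m + i)%nat else 0) _).
  intros i Hi. destruct (Nat.ltb_spec i m); [lia | reflexivity].
Defined.

(* a function of (y, x) in R^m x R^m viewed as a function on R^(m+m) *)
Definition uncurry2 {m} {Y} (h : vec m -> vec m -> Y) : vec (m + m) -> Y :=
  fun z => h (vleft z) (vright z).

Definition vconv {m} (s : nat -> vec m) (l : vec m) : Prop :=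
  forall eps, eps > 0 -> exists N, forall k, (N <= k)%nat -> vnorm (vsub (s k) l) < eps.

Definition is_open {m} (U : vec m -> Prop) : Prop :=
  forall x, U x -> exists d, d > 0 /\ forall y, vnorm (vsub y x) < d -> U y.

Definition is_compact {m} (S : vec m -> Prop) : Prop :=
  forall (I : Type) (U : I -> vec m -> Prop),
    (forall i, is_open (U i)) ->
    (forall x, S x -> exists i, U i x) ->
    exists l : list I, forall x, S x -> exists i, In i l /\ U i x.

Definition is_convex_set {m} (S : vec m -> Prop) : Prop :=
  forall u v c, S u -> S v -> 0 <= c <= 1 ->
    S (vadd (vscal c u) (vscal (1 - c) v)).

Definition nonempty {m} (S : vec m -> Prop) : Prop := exists x, S x.

Definition is_convex_fun {m} (h : vec m -> Rbar) : Prop :=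
  forall u v c, 0 < c < 1 ->
    Rbar_le (h (vadd (vscal c u) (vscal (1 - c) v)))
            (Rbar_plus (Rbar_pscal c (h u)) (Rbar_pscal (1 - c) (h v))).

Definition is_lsc {m} (h : vec m -> Rbar) : Prop :=
  forall x r, Rbar_lt (Finite r) (h x) ->
    exists d, d > 0 /\ forall y, vnorm (vsub y x) < d -> Rbar_lt (Finite r) (h y).

Definition is_proper {m} (h : vec m -> Rbar) : Prop :=
  (forall x, h x <> m_infty) /\ (exists x, h x <> p_infty).

Definition inflate {m} (S : vec m -> Prop) (eps : R) : vec m -> Prop :=
  fun y => exists x, S x /\ vnorm (vsub y x) <= eps.

Fixpoint lincomb {m} (l : list (R * vec m)) : vec m :=
  match l with nil => vzero | cons (c, p) l' => vadd (vscal c p) (lincomb l') end.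

Fixpoint coefsum {m} (l : list (R * vec m)) : R :=
  match l with nil => 0 | cons (c, _) l' => c + coefsum l' end.

Definition aff_hull {m} (S : vec m -> Prop) : vec m -> Prop :=
  fun y => exists l : list (R * vec m),
    (forall cp, In cp l -> S (snd cp)) /\ coefsum l = 1 /\ y = lincomb l.

Definition rel_interior {m} (S : vec m -> Prop) : vec m -> Prop :=
  fun x => S x /\ exists d, d > 0 /\
    forall y, aff_hull S y -> vnorm (vsub y x) < d -> S y.

Definition subgrad {m} (h : vec m -> Rbar) (x beta : vec m) : Prop :=
  exists r, h x = Finite r /\
    forall y, Rbar_le (Finite (r + vinner beta (vsub y x))) (h y).

Section Problem.
Variables (n p q : nat).
Variable (x0 : vec n).
Variable (X : nat -> vec n -> Prop).
Variable (f : nat -> vec n -> vec n -> Rbar).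
Variable (g : nat -> nat -> vec n -> vec n -> R).  (* g t i, i = 0..p-1 *)
Variables (A B : nat -> nat -> nat -> R).        (* A t i j : q x n *)
Variable (b : nat -> vec q).

Definition lin_ok (t : nat) (y x : vec n) : Prop :=
  forall i, (i < q)%nat ->
    rsum n (fun j => A t i j * x j) + rsum n (fun j => B t i j * y j) = b t i.

Definition g_ok (t : nat) (y x : vec n) : Prop :=
  forall i, (i < p)%nat -> g t i y x <= 0.

Definition Xset (t : nat) (y x : vec n) : Prop :=
  X t x /\ lin_ok t y x /\ g_ok t y x.

Definition H0 (T : nat) : Prop :=
  forall t, (1 <= t <= T)%nat ->
    (nonempty (X t) /\ is_convex_set (X t) /\ is_compact (X t)) /\
    (is_proper (uncurry2 (f t)) /\ is_convex_fun (uncurry2 (f t))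
               /\ is_lsc (uncurry2 (f t))) /\
    (forall i, (i < p)%nat ->
                 is_convex_fun (uncurry2 (fun y x => Finite (g t i y x))) /\
                 is_lsc (uncurry2 (fun y x => Finite (g t i y x)))) /\
    (exists eps, eps > 0 /\
                 (forall y x, inflate (X (t - 1)) eps y -> X t x -> f t y x <> p_infty) /\
                 (forall y, inflate (X (t - 1)) eps y ->
                    exists x, X t x /\ g_ok t y x /\ lin_ok t y x)) /\
    ((2 <= t)%nat ->
                 exists z : vec (n + n),
                   X (t - 1) (vleft z) /\ rel_interior (X t) (vright z) /\
                   rel_interior (fun w : vec (n + n) => g_ok t (vleft w) (vright w)) z /\
                   X t (vright z) /\ g_ok t (vleft z) (vright z) /\
                   lin_ok t (vleft z) (vright z)).

Definition traj (z : nat -> vec n) (t : nat) : vec n :=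
  match t with O => x0 | _ => z t end.

Fixpoint cost_upto (z : nat -> vec n) (t : nat) : Rbar :=
  match t with
  | O => Finite 0
  | S t' => Rbar_plus (cost_upto z t') (f (S t') (traj z t') (traj z (S t')))
  end.

Definition feasible (T : nat) (z : nat -> vec n) : Prop :=
  forall t, (1 <= t <= T)%nat -> Xset t (traj z (t - 1)) (traj z t).

Definition optimal_solution (T : nat) (z : nat -> vec n) : Prop :=
  feasible T z /\ forall w, feasible T w -> Rbar_le (cost_upto z T) (cost_upto w T).

Definition optimal_value (T : nat) (v : Rbar) : Prop :=
  Rbar_is_inf (fun c => exists w, feasible T w /\ c = cost_upto w T) v.

Definition Fbar (Qk : nat -> nat -> vec n -> Rbar) (lam : nat -> nat -> R)
  (t k : nat) (y z P : vec n) : Rbar :=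
  Rbar_plus (Rbar_plus (f t y z) (Qk (t + 1)%nat (k - 1)%nat z))
            (Finite (lam t k * (vnorm (vsub z P)) ^ 2)).

End Problem.

(* The cuts are valid: [Qk t k <= Q t], by induction on [k] and backwards on [t].
   Tightness of the cuts at the trial points is then propagated backwards in [t].
   If the previous cuts of [Q (t+1)] become tight at the trial points [x t k],
   optimality of [x t k] in the forward pass, whose proximal term costs at most
   [lam t k * diam(X t)^2 -> 0], makes [uQ t k] tight at [x (t-1) k].  Conversely,
   [Q t] is convex and bounded on a neighbourhood of the compact set [X (t-1)], hence
   locally Lipschitz, and the slopes of nearly tight cuts are bounded; by compactness
   [x (t-1) k] is close to an earlier trial point, whose cut is therefore nearly
   tight at [x (t-1) k] as well.  Summing the resulting stagewise excesses, the costs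
   of the trial trajectories converge to [Q 1 x0], which is thus the optimal value,
   and closedness of the constraints together with lower semicontinuity of the cost
   make every accumulation point optimal. *)

From Stdlib Require Import Reals Lra Lia List.
From Stdlib Require Import FunctionalExtensionality ProofIrrelevance Classical.
Open Scope R_scope.

(** * Vectors, finite sums and norms *)

Lemma vec_ext {m} (u v : vec m) : (forall i, u i = v i) -> u = v.
Proof.
  destruct u as [fu pu], v as [fv pv]; simpl; intros H.
  assert (fu = fv) by (apply functional_extensionality; exact H). subst fv.
  f_equal. apply proof_irrelevance.
Qed.

Lemma vadd_i {m} (u v : vec m) i : vadd u v i = u i + v i.
Proof. reflexivity. Qed.

Lemma vscal_i {m} c (u : vec m) i : vscal c u i = c * u i.
Proof. reflexivity. Qed.

Lemma vsub_i {m} (u v : vec m) i : vsub u v i = u i - v i.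
Proof. unfold vsub. rewrite vadd_i, vscal_i. ring. Qed.

Lemma vzero_i {m} i : (@vzero m) i = 0.
Proof. reflexivity. Qed.

Definition comb {m} (c : R) (u v : vec m) : vec m := vadd (vscal c u) (vscal (1 - c) v).

Lemma comb_i {m} c (u v : vec m) i : comb c u v i = c * u i + (1 - c) * v i.
Proof. reflexivity. Qed.

Lemma comb_1 {m} (u v : vec m) : comb 1 u v = u.
Proof. apply vec_ext; intro i; rewrite comb_i; ring. Qed.

Lemma comb_0 {m} (u v : vec m) : comb 0 u v = v.
Proof. apply vec_ext; intro i; rewrite comb_i; ring. Qed.

Definition vpair {m} (y x : vec m) : vec (m + m).
Proof.
  refine (mkvec (fun i => if Nat.ltb i m then y i else x (i - m)%nat) _).
  intros i Hi. destruct (Nat.ltb_spec i m); [lia|]. apply vsupp. lia.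
Defined.

Lemma vpair_i {m} (y x : vec m) i :
  vpair y x i = if Nat.ltb i m then y i else x (i - m)%nat.
Proof. reflexivity. Qed.

Lemma vleft_pair {m} (y x : vec m) : vleft (vpair y x) = y.
Proof.
  apply vec_ext; intro i. simpl.
  destruct (Nat.ltb_spec i m); [reflexivity|]. symmetry; apply vsupp; lia.
Qed.

Lemma vright_pair {m} (y x : vec m) : vright (vpair y x) = x.
Proof.
  apply vec_ext; intro i. simpl.
  destruct (Nat.ltb_spec i m).
  - destruct (Nat.ltb_spec (m + i) m); [lia|]. f_equal; lia.
  - symmetry; apply vsupp; lia.
Qed.

Lemma uncurry2_pair {m} {Y} (h : vec m -> vec m -> Y) y x :
  uncurry2 h (vpair y x) = h y x.
Proof. unfold uncurry2. rewrite vleft_pair, vright_pair. reflexivity. Qed.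

Lemma comb_pair {m} c (y1 x1 y2 x2 : vec m) :
  comb c (vpair y1 x1) (vpair y2 x2) = vpair (comb c y1 y2) (comb c x1 x2).
Proof.
  apply vec_ext; intro i. rewrite comb_i, !vpair_i.
  destruct (Nat.ltb i m); rewrite comb_i; reflexivity.
Qed.

Lemma rsum_ext k h1 h2 : (forall i, (i < k)%nat -> h1 i = h2 i) -> rsum k h1 = rsum k h2.
Proof.
  induction k; simpl; intros H; [reflexivity|].
  rewrite IHk by (intros; apply H; lia). rewrite H by lia. reflexivity.
Qed.

Lemma rsum_le k h1 h2 : (forall i, (i < k)%nat -> h1 i <= h2 i) -> rsum k h1 <= rsum k h2.
Proof.
  induction k; simpl; intros H; [lra|].
  assert (rsum k h1 <= rsum k h2) by (apply IHk; intros; apply H; lia).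
  assert (h1 k <= h2 k) by (apply H; lia). lra.
Qed.

Lemma rsum_lin k a b h1 h2 :
  rsum k (fun i => a * h1 i + b * h2 i) = a * rsum k h1 + b * rsum k h2.
Proof. induction k; simpl; [ring|]. rewrite IHk. ring. Qed.

Lemma rsum_scal k a h : rsum k (fun i => a * h i) = a * rsum k h.
Proof. induction k; simpl; [ring|]. rewrite IHk. ring. Qed.

Lemma rsum_const k c : rsum k (fun _ => c) = INR k * c.
Proof. induction k; simpl rsum; [simpl; ring|]. rewrite IHk, S_INR. ring. Qed.

Lemma rsum_nonneg k h : (forall i, (i < k)%nat -> 0 <= h i) -> 0 <= rsum k h.
Proof.
  intros H. replace 0 with (rsum k (fun _ => 0)).
  - apply rsum_le; auto.
  - rewrite rsum_const; ring.
Qed.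

Lemma rsum_term k h j : (forall i, (i < k)%nat -> 0 <= h i) -> (j < k)%nat -> h j <= rsum k h.
Proof.
  induction k; simpl; intros H Hj; [lia|].
  assert (0 <= rsum k h) by (apply rsum_nonneg; intros; apply H; lia).
  destruct (Nat.eq_dec j k).
  - subst. lra.
  - assert (h j <= rsum k h) by (apply IHk; [intros; apply H; lia | lia]).
    assert (0 <= h k) by (apply H; lia). lra.
Qed.

Lemma rsum_abs k h : Rabs (rsum k h) <= rsum k (fun i => Rabs (h i)).
Proof.
  induction k; simpl; [rewrite Rabs_R0; lra|].
  eapply Rle_trans; [apply Rabs_triang|]. lra.
Qed.

Lemma rsum_abs_nonneg k (a : nat -> R) : 0 <= rsum k (fun i => Rabs (a i)).
Proof. apply rsum_nonneg. intros; apply Rabs_pos. Qed.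

Lemma vinner_diag_nonneg {m} (u : vec m) : 0 <= vinner u u.
Proof. unfold vinner. apply rsum_nonneg. intros. nra. Qed.

Lemma vnorm_sq {m} (u : vec m) : vnorm u ^ 2 = vinner u u.
Proof. unfold vnorm. rewrite pow2_sqrt; [reflexivity | apply vinner_diag_nonneg]. Qed.

Lemma vnorm_nonneg {m} (u : vec m) : 0 <= vnorm u.
Proof. unfold vnorm. apply sqrt_pos. Qed.

Lemma vinner_sub_diag {m} (a y : vec m) : vinner a (vsub y y) = 0.
Proof.
  unfold vinner. rewrite (rsum_ext _ _ (fun _ => 0)); [rewrite rsum_const; ring|].
  intros i _. rewrite vsub_i. ring.
Qed.

Lemma vnorm_sub_diag {m} (y : vec m) : vnorm (vsub y y) = 0.
Proof.
  unfold vnorm. rewrite vinner_sub_diag. apply sqrt_0.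
Qed.

Lemma coord_le_vnorm {m} (u : vec m) i : Rabs (u i) <= vnorm u.
Proof.
  destruct (Nat.lt_ge_cases i m) as [Hi|Hi].
  - unfold vnorm. rewrite <- sqrt_Rsqr_abs. apply sqrt_le_1_alt.
    apply (rsum_term m (fun i => u i * u i) i); [intros; nra | exact Hi].
  - rewrite (vsupp u i Hi), Rabs_R0. apply vnorm_nonneg.
Qed.

Lemma coord_sub_le_vnorm {m} (w y : vec m) i : Rabs (w i - y i) <= vnorm (vsub w y).
Proof. rewrite <- vsub_i. apply coord_le_vnorm. Qed.

Lemma vnorm_le_coords {m} (u : vec m) d :
  (1 <= m)%nat -> (forall i, (i < m)%nat -> Rabs (u i) <= d) -> vnorm u <= INR m * d.
Proof.
  intros Hm H.
  assert (Hd : 0 <= d) by (eapply Rle_trans; [apply Rabs_pos | apply (H 0%nat); lia]).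
  assert (H1 : 1 <= INR m) by (apply (le_INR 1); lia).
  unfold vnorm. rewrite <- (sqrt_square (INR m * d)) by nra.
  apply sqrt_le_1_alt. unfold vinner.
  eapply Rle_trans.
  - apply (rsum_le m _ (fun _ => d * d)). intros i Hi.
    specialize (H i Hi). pose proof (Rabs_pos (u i)).
    change (u i * u i) with (Rsqr (u i)). rewrite Rsqr_abs. unfold Rsqr. nra.
  - rewrite rsum_const. nra.
Qed.

Lemma vpair_close {m} (a a' b b' : vec m) d : (1 <= m)%nat ->
  vnorm (vsub a a') <= d -> vnorm (vsub b b') <= d ->
  vnorm (vsub (vpair a b) (vpair a' b')) <= INR (m + m) * d.
Proof.
  intros Hm Ha Hb. apply vnorm_le_coords; [lia|]. intros i Hi.
  rewrite vsub_i, !vpair_i. destruct (Nat.ltb i m); rewrite <- vsub_i;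
    eapply Rle_trans; [apply coord_le_vnorm | auto | apply coord_le_vnorm | auto].
Qed.

Lemma inflate_self {m} (K : vec m -> Prop) eps y : eps >= 0 -> K y -> inflate K eps y.
Proof. intros He Hy. exists y. split; auto. rewrite vnorm_sub_diag. lra. Qed.

(** * Extended reals and limits *)

Lemma backward_induction (P : nat -> Prop) a N : P N ->
  (forall t, (a <= t < N)%nat -> P (t + 1)%nat -> P t) -> forall t, (a <= t <= N)%nat -> P t.
Proof.
  intros HN Hstep t Ht. remember (N - t)%nat as j eqn:Hj. revert t Ht Hj.
  induction j as [|j IHj]; intros t Ht Hj.
  - replace t with N by lia. exact HN.
  - apply Hstep; [lia|]. apply IHj; lia.
Qed.

Lemma strict_mono_ge (phi : nat -> nat) :
  (forall j, (phi j < phi (S j))%nat) -> forall j, (j <= phi j)%nat.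
Proof. intros H. induction j; [lia|]. specialize (H j). lia. Qed.

Lemma Rabs_le_between a c : Rabs a <= c -> - c <= a <= c.
Proof.
  intros H. destruct (Rcase_abs a); [rewrite Rabs_left in H | rewrite Rabs_right in H]; lra.
Qed.

Lemma Rabs_le_all_eps_0 r C : 0 <= C -> (forall e, e > 0 -> Rabs r <= C * e) -> r = 0.
Proof.
  intros HC H. destruct (Req_dec r 0) as [|Hr]; auto. exfalso.
  assert (Hpos : 0 < Rabs r) by (apply Rabs_pos_lt; auto).
  specialize (H (Rabs r / (2 * (C + 1))) ltac:(apply Rdiv_lt_0_compat; lra)).
  apply (Rmult_le_compat_l (2 * (C + 1))) in H; [|lra].
  replace (2 * (C + 1) * (C * (Rabs r / (2 * (C + 1))))) with (C * Rabs r) in H by (field; lra).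
  nra.
Qed.

Definition fin (x : Rbar) : R := match x with Finite r => r | _ => 0 end.

Lemma fin_eq x : x <> p_infty -> x <> m_infty -> x = Finite (fin x).
Proof. destruct x; simpl; tauto. Qed.

Lemma fin_between x a b : Rbar_le (Finite a) x -> Rbar_le x (Finite b) ->
  x = Finite (fin x) /\ a <= fin x <= b.
Proof. destruct x; simpl; tauto. Qed.

Lemma Rbar_le_refl x : Rbar_le x x.
Proof. destruct x; simpl; auto; lra. Qed.

Lemma Rbar_le_trans x y z : Rbar_le x y -> Rbar_le y z -> Rbar_le x z.
Proof. destruct x, y, z; simpl; auto; try lra; tauto. Qed.

Lemma Rbar_not_le x y : ~ Rbar_le x y -> Rbar_le y x.
Proof. destruct x, y; simpl; auto; try tauto; intros; lra. Qed.

Lemma Rbar_le_antisym x y : Rbar_le x y -> Rbar_le y x -> x = y.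
Proof. destruct x, y; simpl; try tauto. intros. f_equal. lra. Qed.

Lemma Rbar_le_notp x y : Rbar_le x y -> y <> p_infty -> x <> p_infty.
Proof. destruct x, y; simpl; try congruence; tauto. Qed.

Lemma Rbar_ge_notm x y : Rbar_le y x -> y <> m_infty -> x <> m_infty.
Proof. destruct x, y; simpl; try congruence; tauto. Qed.

Lemma Rbar_le_eps x a :
  (forall eps, eps > 0 -> Rbar_le x (Finite (a + eps))) -> Rbar_le x (Finite a).
Proof.
  destruct x; simpl; auto.
  - intros H. apply Rnot_lt_le. intros Hlt.
    assert (r <= a + (r - a) / 2) by (apply H; lra). lra.
  - intros H. apply (H 1); lra.
Qed.

Lemma Rbar_lt_fin a b : Rbar_lt (Finite a) (Finite b) <-> a < b.
Proof.
  split.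
  - intros [H1 H2]. simpl in H1. destruct (Req_dec a b); [subst; tauto | lra].
  - intros H. split; [simpl; lra|]. intros E; injection E; lra.
Qed.

Lemma Rbar_plus_0_r x : Rbar_plus x (Finite 0) = x.
Proof. destruct x; simpl; auto. f_equal; ring. Qed.

Lemma Rbar_plus_0_l x : Rbar_plus (Finite 0) x = x.
Proof. destruct x; simpl; auto. f_equal; ring. Qed.

Lemma Rbar_plus_assoc a b c : Rbar_plus (Rbar_plus a b) c = Rbar_plus a (Rbar_plus b c).
Proof. destruct a, b, c; simpl; auto. f_equal; ring. Qed.

Lemma Rbar_plus_le_compat_l c a b : Rbar_le a b -> Rbar_le (Rbar_plus c a) (Rbar_plus c b).
Proof. destruct c, a, b; simpl; auto; try tauto; lra. Qed.

Lemma Rbar_plus_le_fin x y a b : Rbar_le x (Finite a) -> Rbar_le y (Finite b) ->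
  Rbar_le (Rbar_plus x y) (Finite (a + b)).
Proof. destruct x, y; simpl; auto; try tauto. lra. Qed.

Lemma Rbar_plus_notp a c : a <> p_infty -> c <> p_infty -> Rbar_plus a c <> p_infty.
Proof. destruct a, c; simpl; congruence. Qed.

Lemma Rbar_plus_notm a c : a <> m_infty -> c <> m_infty -> Rbar_plus a c <> m_infty.
Proof. destruct a, c; simpl; congruence. Qed.

Lemma Rbar_lt_plus_split c a d : a <> m_infty -> d <> m_infty ->
  Rbar_lt (Finite c) (Rbar_plus a d) ->
  exists c1 c2, c = c1 + c2 /\ Rbar_lt (Finite c1) a /\ Rbar_lt (Finite c2) d.
Proof.
  intros Ha Hd H. destruct a as [a| |]; destruct d as [d| |]; try congruence.
  - simpl in H. apply Rbar_lt_fin in H.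
    exists (a - (a + d - c) / 2), (d - (a + d - c) / 2).
    split; [field|]. split; apply Rbar_lt_fin; lra.
  - exists (a - 1), (c - (a - 1)). split; [ring|]. split; [apply Rbar_lt_fin; lra|].
    split; [simpl; auto | congruence].
  - exists (c - (d - 1)), (d - 1). split; [ring|]. split; [|apply Rbar_lt_fin; lra].
    split; [simpl; auto | congruence].
  - exists c, 0. split; [ring|]. split; (split; [simpl; auto | congruence]).
Qed.

Lemma Rbar_max_l x y : Rbar_le x (Rbar_max x y).
Proof. destruct x, y; simpl; auto; try lra. apply Rmax_l. Qed.

Lemma Rbar_max_r x y : Rbar_le y (Rbar_max x y).
Proof. destruct x, y; simpl; auto; try lra. apply Rmax_r. Qed.

Lemma Rbar_max_lub x y z : Rbar_le x z -> Rbar_le y z -> Rbar_le (Rbar_max x y) z.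
Proof. destruct x, y, z; simpl; auto; try tauto. intros. apply Rmax_lub; auto. Qed.

Lemma inf_lb S v w : Rbar_is_inf S v -> S w -> Rbar_le v w.
Proof. intros [H _]; auto. Qed.

Lemma inf_glb S v u : Rbar_is_inf S v -> (forall w, S w -> Rbar_le u w) -> Rbar_le u v.
Proof. intros [_ H]; auto. Qed.

Lemma inf_approx S a eps : Rbar_is_inf S (Finite a) -> eps > 0 ->
  exists w, S w /\ Rbar_le w (Finite (a + eps)).
Proof.
  intros Hinf Heps. apply NNPP. intros Hn.
  assert (Rbar_le (Finite (a + eps)) (Finite a)).
  { apply (inf_glb S); auto. intros w Hw. apply Rbar_not_le. intros Hle. apply Hn; eauto. }
  simpl in H. lra.
Qed.

Definition limsup_nonpos (u : nat -> R) : Prop :=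
  forall eps, eps > 0 -> exists N, forall k, (N <= k)%nat -> u k < eps.

Lemma limsup_nonpos_plus u v :
  limsup_nonpos u -> limsup_nonpos v -> limsup_nonpos (fun k => u k + v k).
Proof.
  intros Hu Hv eps He.
  destruct (Hu (eps / 2)) as [N1 H1]; [lra|]. destruct (Hv (eps / 2)) as [N2 H2]; [lra|].
  exists (Nat.max N1 N2). intros k Hk. specialize (H1 k ltac:(lia)). specialize (H2 k ltac:(lia)).
  lra.
Qed.

Lemma limsup_nonpos_le N0 u w :
  (forall k, (N0 <= k)%nat -> w k <= u k) -> limsup_nonpos u -> limsup_nonpos w.
Proof.
  intros Hle Hu eps He. destruct (Hu eps He) as [N HN]. exists (Nat.max N N0).
  intros k Hk. specialize (Hle k ltac:(lia)). specialize (HN k ltac:(lia)). lra.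
Qed.

Lemma limsup_nonpos_scal c u : 0 <= c -> limsup_nonpos u -> limsup_nonpos (fun k => c * u k).
Proof.
  intros Hc Hu eps He. destruct (Hu (eps / (c + 1))) as [N HN]; [apply Rdiv_lt_0_compat; lra|].
  exists N. intros k Hk. specialize (HN k Hk).
  apply (Rmult_lt_compat_l (c + 1)) in HN; [|lra].
  replace ((c + 1) * (eps / (c + 1))) with eps in HN by (field; lra).
  destruct (Rle_lt_dec 0 (u k)); nra.
Qed.

Lemma Rbar_diff_cv0_of_bound (u v : nat -> Rbar) (e : nat -> R) N0 :
  (forall k, (N0 <= k)%nat ->
     exists a c, u k = Finite a /\ v k = Finite c /\ Rabs (a - c) <= e k) ->
  limsup_nonpos e -> Rbar_diff_cv0 u v.
Proof.
  intros H He eps Heps. destruct (He eps Heps) as [N HN]. exists (Nat.max N N0). intros k Hk.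
  destruct (H k ltac:(lia)) as [a [c [Ha [Hc Hac]]]]. exists a, c. repeat split; auto.
  specialize (HN k ltac:(lia)). lra.
Qed.

Lemma Rbar_cv_of_bound (u : nat -> Rbar) r (e : nat -> R) N0 :
  (forall k, (N0 <= k)%nat -> exists a, u k = Finite a /\ Rabs (a - r) <= e k) ->
  limsup_nonpos e -> Rbar_cv u (Finite r).
Proof.
  intros H He eps Heps. destruct (He eps Heps) as [N HN]. exists (Nat.max N N0). intros k Hk.
  destruct (H k ltac:(lia)) as [a [Ha Har]]. exists a. split; auto.
  specialize (HN k ltac:(lia)). lra.
Qed.

(** * Cubes and compactness *)

Lemma finite_slack k (a : nat -> R) r : (forall i, (i < k)%nat -> a i < r) ->
  exists d, d > 0 /\ forall i, (i < k)%nat -> a i + d <= r.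
Proof.
  induction k; intros H.
  - exists 1. split; [lra | intros; lia].
  - destruct IHk as [d [Hd Hd']]; [intros; apply H; lia|].
    assert (a k < r) by (apply H; lia).
    exists (Rmin d (r - a k)). split; [apply Rmin_pos; lra|].
    intros i Hi. destruct (Nat.eq_dec i k).
    + subst. pose proof (Rmin_r d (r - a k)). lra.
    + pose proof (Rmin_l d (r - a k)). specialize (Hd' i ltac:(lia)). lra.
Qed.

Lemma finite_nat_bound k (a : nat -> R) : exists N : nat, forall i, (i < k)%nat -> a i < INR N.
Proof.
  induction k.
  - exists 0%nat. intros; lia.
  - destruct IHk as [N HN]. destruct (INR_unbounded (a k)) as [N' HN'].
    exists (Nat.max N N'). intros i Hi.
    destruct (Nat.eq_dec i k).
    + subst. eapply Rlt_le_trans; [exact HN'|]. apply le_INR; lia.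
    + eapply Rlt_le_trans; [apply HN; lia|]. apply le_INR; lia.
Qed.

Lemma fold_max_ge (l : list nat) N : In N l -> (N <= fold_right Nat.max 0%nat l)%nat.
Proof.
  induction l; simpl; intros H; [tauto|]. destruct H; [subst; lia|]. specialize (IHl H); lia.
Qed.

Definition cube {m} (z : vec m) (h : R) (w : vec m) : Prop :=
  forall i, (i < m)%nat -> Rabs (w i - z i) <= h.

Definition open_cube {m} (z : vec m) (h : R) (w : vec m) : Prop :=
  forall i, (i < m)%nat -> Rabs (w i - z i) < h.

Lemma cube_center {m} (z : vec m) h : 0 <= h -> cube z h z.
Proof. intros Hh i _. unfold Rminus; rewrite Rplus_opp_r, Rabs_R0; lra. Qed.

Lemma open_cube_center {m} (z : vec m) h : 0 < h -> open_cube z h z.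
Proof. intros Hh i _. unfold Rminus; rewrite Rplus_opp_r, Rabs_R0; lra. Qed.

Lemma vnorm_cube {m} (y w : vec m) e : vnorm (vsub w y) <= e -> cube y e w.
Proof. intros H i _. eapply Rle_trans; [apply coord_sub_le_vnorm | exact H]. Qed.

Lemma cube_comb {m} (z w1 w2 : vec m) h c : cube z h w1 -> cube z h w2 -> 0 <= c <= 1 ->
  cube z h (comb c w1 w2).
Proof.
  intros H1 H2 Hc i Hi. rewrite comb_i.
  replace (c * w1 i + (1 - c) * w2 i - z i) with (c * (w1 i - z i) + (1 - c) * (w2 i - z i))
    by ring.
  eapply Rle_trans; [apply Rabs_triang|].
  rewrite !Rabs_mult, (Rabs_right c), (Rabs_right (1 - c)) by lra.
  specialize (H1 i Hi). specialize (H2 i Hi). nra.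
Qed.

Lemma rsum_mul_diff_le {m} (a : nat -> R) (u v : vec m) e : cube v e u ->
  Rabs (rsum m (fun j => a j * u j) - rsum m (fun j => a j * v j))
  <= rsum m (fun j => Rabs (a j)) * e.
Proof.
  intros H.
  replace (rsum m (fun j => a j * u j) - rsum m (fun j => a j * v j))
    with (rsum m (fun j => a j * (u j - v j))).
  2:{ replace (rsum m (fun j => a j * u j) - rsum m (fun j => a j * v j))
        with (1 * rsum m (fun j => a j * u j) + (-1) * rsum m (fun j => a j * v j)) by ring.
      rewrite <- rsum_lin. apply rsum_ext. intros; ring. }
  eapply Rle_trans; [apply rsum_abs|]. rewrite Rmult_comm, <- rsum_scal. apply rsum_le.
  intros j Hj. rewrite Rabs_mult. specialize (H j Hj). pose proof (Rabs_pos (a j)). nra.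
Qed.

Lemma open_cube_open {m} (z : vec m) r : is_open (open_cube z r).
Proof.
  intros y Hy. destruct (finite_slack m (fun i => Rabs (y i - z i)) r Hy) as [d [Hd Hd']].
  exists d. split; auto. intros w Hw i Hi.
  pose proof (coord_sub_le_vnorm w y i). specialize (Hd' i Hi).
  replace (w i - z i) with ((w i - y i) + (y i - z i)) by ring.
  eapply Rle_lt_trans; [apply Rabs_triang|]. lra.
Qed.

Lemma is_open_and {m} (P : Prop) (U : vec m -> Prop) : is_open U -> is_open (fun y => P /\ U y).
Proof.
  intros HU y [HP Hy]. destruct (HU y Hy) as [d [Hd H]]. exists d; split; auto.
Qed.

Lemma compact_bounded {m} (S : vec m -> Prop) : is_compact S ->
  exists R, 0 <= R /\ forall y, S y -> forall i, Rabs (y i) <= R.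
Proof.
  intros HS.
  destruct (HS nat (fun N => open_cube vzero (INR N))) as [l Hl].
  - intros N. apply open_cube_open.
  - intros y _. destruct (finite_nat_bound m (fun i => Rabs (y i - (@vzero m) i))) as [N HN].
    eauto.
  - exists (INR (fold_right Nat.max 0%nat l)). split; [apply pos_INR|].
    intros y Hy i. destruct (Hl y Hy) as [N [HN HU]].
    destruct (Nat.lt_ge_cases i m) as [Hi|Hi].
    + specialize (HU i Hi). rewrite vzero_i, Rminus_0_r in HU.
      pose proof (le_INR _ _ (fold_max_ge l N HN)). lra.
    + rewrite (vsupp y i Hi), Rabs_R0. apply pos_INR.
Qed.

Lemma compact_sq_diameter {m} (K : vec m -> Prop) : is_compact K -> exists D, 0 <= D /\
  forall y z, K y -> K z -> vnorm (vsub y z) ^ 2 <= D.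
Proof.
  intros HK. destruct (compact_bounded K HK) as [R [HR HRy]].
  exists (INR m * ((2 * R) * (2 * R))). split; [apply Rmult_le_pos; [apply pos_INR | nra]|].
  intros y z Hy Hz. rewrite vnorm_sq. unfold vinner. rewrite <- rsum_const. apply rsum_le.
  intros i Hi. rewrite vsub_i. pose proof (HRy y Hy i). pose proof (HRy z Hz i).
  assert (Rabs (y i - z i) <= 2 * R).
  { unfold Rminus. eapply Rle_trans; [apply Rabs_triang|]. rewrite Rabs_Ropp. lra. }
  change ((y i - z i) * (y i - z i)) with (Rsqr (y i - z i)). rewrite Rsqr_abs. unfold Rsqr.
  pose proof (Rabs_pos (y i - z i)). nra.
Qed.

Lemma compact_seq_closed {m} (K : vec m -> Prop) (s : nat -> vec m) l :
  is_compact K -> (forall j, K (s j)) -> vconv s l -> K l.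
Proof.
  intros HS Hs Hc. apply NNPP. intros Hl.
  set (far := fun (N : nat) (y : vec m) =>
    exists i, (i < m)%nat /\ / INR (S N) < Rabs (y i - l i)).
  destruct (HS nat far) as [L HL].
  - intros N y [i [Hi Hy]].
    exists (Rabs (y i - l i) - / INR (S N)). split; [lra|].
    intros w Hw. exists i. split; auto.
    pose proof (coord_sub_le_vnorm w y i).
    assert (Rabs (y i - l i) <= Rabs (w i - y i) + Rabs (w i - l i)).
    { replace (y i - l i) with (-(w i - y i) + (w i - l i)) by ring.
      eapply Rle_trans; [apply Rabs_triang|]. rewrite Rabs_Ropp. lra. }
    lra.
  - intros y Hy.
    assert (Hne : exists i, (i < m)%nat /\ y i <> l i).
    { apply NNPP. intros Hn. apply Hl. replace l with y; auto. apply vec_ext. intros i.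
      destruct (Nat.lt_ge_cases i m) as [Hi|Hi].
      - apply NNPP. intros Hne. apply Hn. eauto.
      - rewrite !vsupp by auto. reflexivity. }
    destruct Hne as [i [Hi Hne]].
    assert (Hpos : 0 < Rabs (y i - l i)) by (apply Rabs_pos_lt; lra).
    destruct (archimed_cor1 _ Hpos) as [N [HN HN0]].
    exists (pred N), i. split; auto. replace (S (pred N)) with N by lia. exact HN.
  - set (N0 := fold_right Nat.max 0%nat L).
    assert (He : / INR (S N0) > 0) by (apply Rinv_0_lt_compat, lt_0_INR; lia).
    destruct (Hc _ He) as [k Hk]. specialize (Hk k (le_n k)).
    destruct (HL (s k) (Hs k)) as [N [HN [i [Hi Hlt]]]].
    pose proof (coord_sub_le_vnorm (s k) l i).
    assert (/ INR (S N0) <= / INR (S N)).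
    { apply Rinv_le_contravar; [apply lt_0_INR; lia|].
      apply le_INR. pose proof (fold_max_ge L N HN). fold N0 in H0. lia. }
    lra.
Qed.

Lemma compact_seq_near_earlier {m} (K : vec m -> Prop) (y : nat -> vec m) d N :
  is_compact K -> (forall k, (1 <= k)%nat -> K (y k)) -> d > 0 ->
  exists M, forall k, (M <= k)%nat -> exists j, (N <= j)%nat /\ (j < k)%nat /\
     open_cube (y j) (2 * d) (y k).
Proof.
  intros HK Hy Hd.
  set (U := fun (c w : vec m) => K c /\ open_cube c d w).
  destruct (HK (vec m) U) as [l Hl].
  - intros c. apply is_open_and, open_cube_open.
  - intros c Hc. exists c. split; auto. apply open_cube_center; lra.
  - (* fix, for each center whose cube the sequence enters after time [N], one such time *)
    assert (Hvisit : forall l : list (vec m), exists M, forall c, In c l ->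
        forall k, (M <= k)%nat -> U c (y k) -> exists j, (N <= j)%nat /\ (j < k)%nat /\ U c (y j)).
    { induction l0 as [|c l0 IH].
      - exists 0%nat. simpl; tauto.
      - destruct IH as [M HM].
        destruct (classic (exists k0, (N <= k0)%nat /\ U c (y k0))) as [[k0 [Hk0 HU]]|Hno].
        + exists (Nat.max M (k0 + 1)). intros c' Hc' k Hk HUk. destruct Hc' as [<-|Hc'].
          * exists k0. repeat split; try lia; apply HU.
          * apply HM; auto; lia.
        + exists (Nat.max M N). intros c' Hc' k Hk HUk. destruct Hc' as [<-|Hc'].
          * exfalso. apply Hno. exists k. split; auto; lia.
          * apply HM; auto; lia. }
    destruct (Hvisit l) as [M HM].
    exists (Nat.max M 1). intros k Hk.
    destruct (Hl (y k) (Hy k ltac:(lia))) as [c [Hc HUc]].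
    destruct (HM c Hc k ltac:(lia) HUc) as [j [Hj1 [Hj2 [_ HUj]]]].
    exists j. repeat split; auto. intros i Hi.
    destruct HUc as [_ H1]. specialize (H1 i Hi). specialize (HUj i Hi).
    replace (y k i - y j i) with ((y k i - c i) - (y j i - c i)) by ring.
    eapply Rle_lt_trans; [apply Rabs_triang|]. rewrite Rabs_Ropp. lra.
Qed.

Lemma compact_uniform_cube_bound {m} (K : vec m -> Prop) (F : vec m -> R) h :
  is_compact K -> h > 0 ->
  (forall c, K c -> exists M, forall w, cube c h w -> F w <= M) ->
  exists M, forall y, K y -> forall w, cube y (h / 2) w -> F w <= M.
Proof.
  intros HK Hh Hloc.
  set (U := fun (cM : vec m * R) (y : vec m) =>
     (K (fst cM) /\ forall w, cube (fst cM) h w -> F w <= snd cM) /\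
     open_cube (fst cM) (h / 2) y).
  destruct (HK _ U) as [l Hl].
  - intros cM. apply is_open_and, open_cube_open.
  - intros y Hy. destruct (Hloc y Hy) as [M HM]. exists (y, M).
    split; [split; auto|]. apply open_cube_center; lra.
  - set (Mx := fold_right (fun cM acc => Rmax (snd cM) acc) 0 l).
    assert (HMx : forall cM, In cM l -> snd cM <= Mx).
    { unfold Mx. clear. induction l as [|a l IH]; simpl; [tauto|].
      intros cM [<-|H]; [apply Rmax_l|]. eapply Rle_trans; [apply IH; auto | apply Rmax_r]. }
    exists Mx. intros y Hy w Hw.
    destruct (Hl y Hy) as [[c M] [Hin [[_ HB] Hbox]]]. simpl in *.
    eapply Rle_trans; [|apply (HMx (c, M) Hin)]. apply HB.
    intros i Hi. specialize (Hw i Hi). specialize (Hbox i Hi).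
    replace (w i - c i) with ((w i - y i) + (y i - c i)) by ring.
    eapply Rle_trans; [apply Rabs_triang|]. simpl. lra.
Qed.

(** * Convex functions on cubes and their cuts *)

Definition vset {m} (a : vec m) (k : nat) (v : R) : vec m.
Proof.
  refine (mkvec (fun i => if andb (Nat.eqb i k) (Nat.ltb k m) then v else a i) _).
  intros i Hi. destruct (Nat.eqb_spec i k); destruct (Nat.ltb_spec k m); simpl; try lia;
    apply vsupp; auto.
Defined.

Lemma vset_i {m} (a : vec m) k v i : (k < m)%nat ->
  vset a k v i = if Nat.eqb i k then v else a i.
Proof.
  intros Hk. simpl. destruct (Nat.eqb i k); destruct (Nat.ltb_spec k m); simpl; auto; lia.
Qed.

Lemma cube_vset {m} (z w : vec m) h k v : (k < m)%nat ->
  cube z h w -> Rabs (v - z k) <= h -> cube z h (vset w k v).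
Proof.
  intros Hk Hw Hv i Hi. rewrite vset_i by auto.
  destruct (Nat.eqb_spec i k); [subst; auto | apply Hw; auto].
Qed.

Lemma cube_vset_comb {m} (z w : vec m) h k : h > 0 -> (k < m)%nat -> cube z h w ->
  let c := (w k - (z k - h)) / (2 * h) in
  0 <= c <= 1 /\ comb c (vset w k (z k + h)) (vset w k (z k - h)) = w.
Proof.
  intros Hh Hk Hw c.
  assert (Hwk : Rabs (w k - z k) <= h) by (apply Hw; auto).
  apply Rabs_le_between in Hwk. split.
  - unfold c. split.
    + apply Rmult_le_pos; [lra|]. left; apply Rinv_0_lt_compat; lra.
    + apply (Rmult_le_reg_l (2 * h)); [lra|].
      replace (2 * h * ((w k - (z k - h)) / (2 * h))) with (w k - (z k - h)) by (field; lra).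
      lra.
  - apply vec_ext. intros i. rewrite comb_i, !vset_i by auto.
    destruct (Nat.eqb_spec i k); [subst i; unfold c; field; lra | ring].
Qed.

Section ConvexOnCube.
Variables (m : nat) (F : vec m -> R) (z : vec m) (h : R).
Hypothesis Hh : h > 0.
Hypothesis Fconv : forall w1 w2 c, cube z h w1 -> cube z h w2 -> 0 <= c <= 1 ->
  F (comb c w1 w2) <= c * F w1 + (1 - c) * F w2.

Lemma convex_cube_bounded_tail k : (k <= m)%nat -> forall a, cube z h a ->
  exists M, forall w, cube z h w -> (forall i, (k <= i)%nat -> w i = a i) -> F w <= M.
Proof.
  induction k as [|k IHk]; intros Hkm a Ha.
  - exists (F a). intros w Hw Hwa.
    replace w with a by (apply vec_ext; intros i; symmetry; apply Hwa; lia). lra.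
  - assert (Hk : (k < m)%nat) by lia.
    assert (Hp : Rabs (z k + h - z k) <= h)
      by (replace (z k + h - z k) with h by ring; rewrite Rabs_right; lra).
    assert (Hm : Rabs (z k - h - z k) <= h)
      by (replace (z k - h - z k) with (- h) by ring; rewrite Rabs_Ropp, Rabs_right; lra).
    destruct (IHk ltac:(lia) _ (cube_vset z a h k _ Hk Ha Hp)) as [Mp HMp].
    destruct (IHk ltac:(lia) _ (cube_vset z a h k _ Hk Ha Hm)) as [Mm HMm].
    exists (Rmax Mp Mm). intros w Hw Hwa.
    set (wp := vset w k (z k + h)). set (wm := vset w k (z k - h)).
    assert (Hwp : cube z h wp) by (apply cube_vset; auto).
    assert (Hwm : cube z h wm) by (apply cube_vset; auto).
    assert (Bp : F wp <= Mp).
    { apply HMp; auto. intros i Hi. unfold wp. rewrite !vset_i by auto.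
      destruct (Nat.eqb_spec i k); auto. apply Hwa; lia. }
    assert (Bm : F wm <= Mm).
    { apply HMm; auto. intros i Hi. unfold wm. rewrite !vset_i by auto.
      destruct (Nat.eqb_spec i k); auto. apply Hwa; lia. }
    destruct (cube_vset_comb z w h k Hh Hk Hw) as [Hc Hw'].
    set (c := (w k - (z k - h)) / (2 * h)) in *.
    pose proof (Fconv wp wm c Hwp Hwm Hc) as HC. fold wp wm in Hw'. rewrite Hw' in HC.
    pose proof (Rmax_l Mp Mm). pose proof (Rmax_r Mp Mm). nra.
Qed.

Lemma convex_cube_bounded : exists M, forall w, cube z h w -> F w <= M.
Proof.
  destruct (convex_cube_bounded_tail m (le_n m) z (cube_center z h ltac:(lra))) as [M HM].
  exists M. intros w Hw. apply HM; auto. intros i Hi. rewrite !vsupp by auto. reflexivity.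
Qed.

End ConvexOnCube.

Definition vsign {m} (v : vec m) : vec m.
Proof.
  refine (mkvec (fun i => if Nat.ltb i m then (if Rle_dec 0 (v i) then 1 else -1) else 0) _).
  intros i Hi. destruct (Nat.ltb_spec i m); [lia | reflexivity].
Defined.

Lemma vinner_sign_step {m} (a z : vec m) h :
  vinner a (vsub (vadd z (vscal h (vsign a))) z) = h * rsum m (fun i => Rabs (a i)).
Proof.
  unfold vinner. rewrite <- rsum_scal. apply rsum_ext. intros i Hi.
  rewrite vsub_i, vadd_i, vscal_i. simpl. destruct (Nat.ltb_spec i m); [|lia].
  destruct (Rle_dec 0 (a i)).
  - rewrite Rabs_right by lra. ring.
  - rewrite Rabs_left by lra. ring.
Qed.

Lemma cube_sign_step {m} (a z : vec m) h : 0 <= h -> cube z h (vadd z (vscal h (vsign a))).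
Proof.
  intros Hh i Hi. rewrite vadd_i, vscal_i. simpl. destruct (Nat.ltb_spec i m); [|lia].
  replace (z i + h * (if Rle_dec 0 (a i) then 1 else -1) - z i)
    with (h * (if Rle_dec 0 (a i) then 1 else -1)) by ring.
  rewrite Rabs_mult, Rabs_right by lra.
  destruct (Rle_dec 0 (a i)); [rewrite Rabs_R1 | rewrite Rabs_left by lra]; lra.
Qed.

Lemma vinner_abs_le {m} (a v : vec m) c : (forall i, (i < m)%nat -> Rabs (v i) <= c) ->
  Rabs (vinner a v) <= rsum m (fun i => Rabs (a i)) * c.
Proof.
  intros H. unfold vinner. eapply Rle_trans; [apply rsum_abs|].
  rewrite Rmult_comm, <- rsum_scal. apply rsum_le. intros i Hi.
  rewrite Rabs_mult. specialize (H i Hi). pose proof (Rabs_pos (a i)). nra.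
Qed.

Section CutsOfConvexFunction.
Variables (m : nat) (Qf : vec m -> R) (z : vec m) (h M mm : R).
Hypothesis Hh : h > 0.
Hypothesis Hlow : mm <= Qf z.
Hypothesis Hup : forall w, cube z h w -> Qf w <= M.
Hypothesis Hconv : forall w c, cube z h w -> 0 <= c <= 1 ->
  Qf (comb c w z) <= c * Qf w + (1 - c) * Qf z.

(* Scaling [w - z] up to the boundary of the cube and using convexity on the
   segment from [z]. *)
Lemma convex_cube_lipschitz (w : vec m) :
  rsum m (fun i => Rabs (w i - z i)) <= h ->
  Qf w <= Qf z + rsum m (fun i => Rabs (w i - z i)) / h * (M - mm).
Proof.
  intros Hrho. set (rho := rsum m (fun i => Rabs (w i - z i))) in *.
  assert (Hcoord : forall i, (i < m)%nat -> Rabs (w i - z i) <= rho)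
    by (intros; apply (rsum_term m (fun i => Rabs (w i - z i))); auto; intros; apply Rabs_pos).
  assert (HMz : Qf z <= M) by (apply Hup, cube_center; lra).
  destruct (Req_dec rho 0) as [E|E].
  - assert (w = z).
    { apply vec_ext. intros i. destruct (Nat.lt_ge_cases i m) as [Hi|Hi].
      - specialize (Hcoord i Hi). rewrite E in Hcoord.
        apply Rabs_le_between in Hcoord. lra.
      - rewrite !vsupp by auto. reflexivity. }
    subst w. rewrite E. unfold Rdiv. rewrite !Rmult_0_l. lra.
  - assert (Hr : rho > 0) by (assert (0 <= rho) by apply rsum_abs_nonneg; lra).
    set (v := vadd z (vscal (h / rho) (vsub w z))).
    assert (Hv : cube z h v).
    { intros i Hi. unfold v. rewrite vadd_i, vscal_i, vsub_i.
      replace (z i + h / rho * (w i - z i) - z i) with (h / rho * (w i - z i)) by ring.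
      rewrite Rabs_mult, (Rabs_right (h / rho)) by (apply Rle_ge, Rlt_le, Rdiv_lt_0_compat; lra).
      apply (Rmult_le_reg_l rho); [lra|].
      replace (rho * (h / rho * Rabs (w i - z i))) with (h * Rabs (w i - z i)) by (field; lra).
      specialize (Hcoord i Hi). nra. }
    assert (Hw : comb (rho / h) v z = w).
    { apply vec_ext. intros i. rewrite comb_i. unfold v. rewrite vadd_i, vscal_i, vsub_i.
      field; lra. }
    assert (Hc : 0 <= rho / h <= 1).
    { split.
      - apply Rmult_le_pos; [lra|]. left; apply Rinv_0_lt_compat; lra.
      - apply (Rmult_le_reg_l h); [lra|]. replace (h * (rho / h)) with rho by (field; lra). lra. }
    pose proof (Hconv v (rho / h) Hv Hc) as Hcv. rewrite Hw in Hcv.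
    pose proof (Hup v Hv).
    assert (rho / h * Qf v <= rho / h * M) by (apply Rmult_le_compat_l; lra).
    assert (rho / h * (M - Qf z) <= rho / h * (M - mm)) by (apply Rmult_le_compat_l; lra).
    nra.
Qed.

(* Test the cut at the corner of the cube in the direction of the signs of [beta]. *)
Lemma cut_slope_bound u (beta : vec m) :
  (forall w, cube z h w -> u + vinner beta (vsub w z) <= Qf w) -> Qf z - u <= 1 ->
  rsum m (fun i => Rabs (beta i)) <= (M - mm + 1) / h.
Proof.
  intros Hcut Hgap.
  set (w := vadd z (vscal h (vsign beta))).
  assert (Hw : cube z h w) by (apply cube_sign_step; lra).
  pose proof (Hcut w Hw) as Hc. unfold w in Hc. rewrite vinner_sign_step in Hc.
  pose proof (Hup w Hw).
  apply (Rmult_le_reg_l h); [lra|].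
  replace (h * ((M - mm + 1) / h)) with (M - mm + 1) by (field; lra).
  unfold w in H. lra.
Qed.

Lemma cut_gap_near_center u (beta : vec m) ell (y : vec m) r K :
  cube z r y -> 0 <= r -> INR m * r <= h -> rsum m (fun i => Rabs (beta i)) <= K ->
  u + vinner beta (vsub y z) <= ell ->
  Qf y - ell <= Qf z - u + r * (INR m * ((M - mm) / h) + K).
Proof.
  intros Hy Hr Hmr HK Hell.
  assert (Hrho : rsum m (fun i => Rabs (y i - z i)) <= INR m * r)
    by (rewrite <- rsum_const; apply rsum_le; auto).
  assert (HMm : mm <= M) by (eapply Rle_trans; [exact Hlow | apply Hup, cube_center; lra]).
  assert (Hlip := convex_cube_lipschitz y ltac:(lra)).
  assert (Hdiv : rsum m (fun i => Rabs (y i - z i)) / h * (M - mm) <= INR m * r * ((M - mm) / h)).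
  { unfold Rdiv. assert (0 <= / h) by (left; apply Rinv_0_lt_compat; lra).
    pose proof (rsum_abs_nonneg m (fun i => y i - z i)).
    assert (rsum m (fun i => Rabs (y i - z i)) * / h <= INR m * r * / h)
      by (apply Rmult_le_compat_r; lra).
    nra. }
  assert (Hin : Rabs (vinner beta (vsub y z)) <= rsum m (fun i => Rabs (beta i)) * r)
    by (apply vinner_abs_le; intros i Hi; rewrite vsub_i; auto).
  apply Rabs_le_between in Hin.
  pose proof (rsum_abs_nonneg m beta).
  assert (rsum m (fun i => Rabs (beta i)) * r <= K * r) by (apply Rmult_le_compat_r; lra).
  nra.
Qed.

End CutsOfConvexFunction.

Lemma small_radius m h C eps : (1 <= m)%nat -> h > 0 -> 0 <= C -> eps > 0 ->
  exists d, d > 0 /\ INR m * (2 * d) <= h /\ 2 * d * C <= eps / 2.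
Proof.
  intros Hm Hh HC He. assert (Hm1 : 1 <= INR m) by (apply (le_INR 1); lia).
  set (d := Rmin (h / (2 * INR m)) (eps / (4 * (C + 1)))).
  exists d. split; [apply Rmin_pos; apply Rdiv_lt_0_compat; lra|]. split.
  - pose proof (Rmin_l (h / (2 * INR m)) (eps / (4 * (C + 1)))) as H. fold d in H.
    apply (Rmult_le_compat_l (2 * INR m)) in H; [|lra].
    replace (2 * INR m * (h / (2 * INR m))) with h in H by (field; lra). lra.
  - pose proof (Rmin_r (h / (2 * INR m)) (eps / (4 * (C + 1)))) as H. fold d in H.
    apply (Rmult_le_compat_l (2 * (C + 1))) in H; [|lra].
    replace (2 * (C + 1) * (eps / (4 * (C + 1)))) with (eps / 2) in H by (field; lra).
    assert (0 <= d) by (unfold d; apply Rmin_glb; apply Rmult_le_pos; try lra;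
                        left; apply Rinv_0_lt_compat; lra).
    nra.
Qed.

(* The cut computed at the trial point [y j] is nearly tight there; by compactness
   a later trial point [y k] is close to such a [y j], and bounded cut slopes plus
   local Lipschitz continuity of [Qf] transfer the tightness to [y k]. *)
Lemma lagged_cut_gap_vanishes {m} (K : vec m -> Prop) (Qf : vec m -> R) (y : nat -> vec m)
  (u : nat -> R) (beta : nat -> vec m) (ell : nat -> R) h M mm :
  (1 <= m)%nat -> is_compact K -> (forall k, (1 <= k)%nat -> K (y k)) -> h > 0 ->
  (forall z, K z -> mm <= Qf z) ->
  (forall z, K z -> forall w, cube z h w -> Qf w <= M) ->
  (forall z, K z -> forall w c, cube z h w -> 0 <= c <= 1 ->
       Qf (comb c w z) <= c * Qf w + (1 - c) * Qf z) ->
  (forall j, (1 <= j)%nat -> forall w, cube (y j) h w ->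
       u j + vinner (beta j) (vsub w (y j)) <= Qf w) ->
  (forall k j, (1 <= j)%nat -> (j < k)%nat ->
       u j + vinner (beta j) (vsub (y k) (y j)) <= ell k) ->
  limsup_nonpos (fun k => Qf (y k) - u k) ->
  limsup_nonpos (fun k => Qf (y k) - ell k).
Proof.
  intros Hm HK Hy Hh Hlow Hup Hconv Hcut Hell Hu eps Heps.
  assert (HMm : mm <= M).
  { pose proof (Hy 1%nat (le_n _)). eapply Rle_trans; [apply Hlow; eauto|].
    apply (Hup (y 1%nat)); auto. apply cube_center; lra. }
  set (Kb := (M - mm + 1) / h).
  set (C := INR m * ((M - mm) / h) + Kb).
  assert (HC : 0 <= C).
  { assert (0 <= / h) by (left; apply Rinv_0_lt_compat; lra).
    assert (0 <= (M - mm) / h) by (apply Rmult_le_pos; lra).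
    assert (0 <= Kb) by (apply Rmult_le_pos; lra).
    pose proof (pos_INR m). unfold C. nra. }
  destruct (small_radius m h C eps Hm Hh HC Heps) as [d [Hd [Hdh Hde]]].
  destruct (Hu (Rmin (eps / 2) 1)) as [N HN]; [apply Rmin_pos; lra|].
  destruct (compact_seq_near_earlier K y d (Nat.max N 1) HK Hy Hd) as [N' HN'].
  exists N'. intros k Hk.
  destruct (HN' k Hk) as [j [Hj1 [Hj2 Hjk]]].
  assert (Hj : (1 <= j)%nat) by lia.
  specialize (HN j ltac:(lia)).
  pose proof (Rmin_l (eps / 2) 1). pose proof (Rmin_r (eps / 2) 1).
  assert (Hbeta : rsum m (fun i => Rabs (beta j i)) <= Kb)
    by (apply (cut_slope_bound m Qf (y j) h M mm Hh (Hlow _ (Hy j Hj)) (Hup _ (Hy j Hj))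
                 (u j) (beta j) (Hcut j Hj)); lra).
  pose proof (cut_gap_near_center m Qf (y j) h M mm Hh (Hlow _ (Hy j Hj)) (Hup _ (Hy j Hj))
    (Hconv _ (Hy j Hj)) (u j) (beta j) (ell k) (y k) (2 * d) Kb
    ltac:(intros i Hi; left; apply Hjk; auto) ltac:(lra) Hdh Hbeta (Hell k j Hj Hj2)).
  fold C in H1. lra.
Qed.

(** * Convergence of REDDP *)

Section REDDP.
Variables (n p q T : nat).
Hypothesis Hn : (1 <= n)%nat.
Hypothesis HT : (1 <= T)%nat.
Variable x0 : vec n.
Variable X : nat -> vec n -> Prop.
Variable f : nat -> vec n -> vec n -> Rbar.
Variable g : nat -> nat -> vec n -> vec n -> R.
Variables A B : nat -> nat -> nat -> R.
Variable b : nat -> vec q.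
Hypothesis HX0 : forall y, X 0%nat y <-> y = x0.
Hypothesis HH0 : H0 n p q X f g A B b T.
Variable Q : nat -> vec n -> Rbar.
Hypothesis HQT1 : forall y, Q (T + 1)%nat y = Finite 0.
Hypothesis HQ : forall t y, (1 <= t <= T)%nat ->
  Rbar_is_inf (fun v => exists x, Xset n p q X g A B b t y x /\
                                  v = Rbar_plus (f t y x) (Q (t + 1)%nat x))
              (Q t y).
Variable lam : nat -> nat -> R.
Variable xP : nat -> nat -> vec n.
Hypothesis Hlam_nn : forall t k, 0 <= lam t k.
Hypothesis HlamT : forall k, (1 <= k)%nat -> lam T k = 0.
Hypothesis Hlam_lim : forall t, (1 <= t <= T - 1)%nat -> Un_cv (fun k => lam t k) 0.
Hypothesis HxP : forall t k, (1 <= t <= T)%nat -> (1 <= k)%nat -> X t (xP t k).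
Variable x : nat -> nat -> vec n.
Variable Qk : nat -> nat -> vec n -> Rbar.
Variable uQ : nat -> nat -> vec n -> Rbar.
Variable beta : nat -> nat -> vec n.
Hypothesis HQk_T1 : forall k y, Qk (T + 1)%nat k y = Finite 0.
Hypothesis HQk0 : forall t y, (2 <= t <= T)%nat -> X (t - 1)%nat y ->
  Rbar_le (Qk t 0%nat y) (Q t y) /\ Qk t 0%nat y <> p_infty.
Hypothesis Hfwd0 : forall k, (1 <= k)%nat -> x 0%nat k = x0.
Hypothesis Hfwd : forall t k, (1 <= t <= T)%nat -> (1 <= k)%nat ->
  Xset n p q X g A B b t (x (t - 1)%nat k) (x t k) /\
  forall z, Xset n p q X g A B b t (x (t - 1)%nat k) z ->
    Rbar_le (Fbar n f Qk lam t k (x (t - 1)%nat k) (x t k) (xP t k))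
            (Fbar n f Qk lam t k (x (t - 1)%nat k) z (xP t k)).
Hypothesis HuQ : forall t k y, (1 <= t <= T)%nat -> (1 <= k)%nat ->
  Rbar_is_inf (fun v => exists z, Xset n p q X g A B b t y z /\
                                  v = Rbar_plus (f t y z) (Qk (t + 1)%nat k z))
              (uQ t k y).
Hypothesis Hbwd : forall t k, (2 <= t <= T)%nat -> (1 <= k)%nat ->
  subgrad (uQ t k) (x (t - 1)%nat k) (beta t k) /\
  forall y, X (t - 1)%nat y ->
    Qk t k y = Rbar_max (Qk t (k - 1)%nat y)
                 (Rbar_plus (uQ t k (x (t - 1)%nat k))
                    (Finite (vinner (beta t k) (vsub y (x (t - 1)%nat k))))).

Local Notation XS := (Xset n p q X g A B b).

Lemma X_compact t : (1 <= t <= T)%nat -> is_compact (X t).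
Proof. intros Ht. apply (HH0 t Ht). Qed.

Lemma f_notm t y z : (1 <= t <= T)%nat -> f t y z <> m_infty.
Proof.
  intros Ht. destruct (HH0 t Ht) as [_ [[[Hpr _] _] _]].
  rewrite <- (uncurry2_pair (f t) y z). apply Hpr.
Qed.

Lemma H0_inflate t : (1 <= t <= T)%nat -> exists eps, eps > 0 /\
  (forall y z, inflate (X (t - 1)) eps y -> X t z -> f t y z <> p_infty) /\
  (forall y, inflate (X (t - 1)) eps y -> exists z, XS t y z).
Proof.
  intros Ht. destruct (HH0 t Ht) as [_ [_ [_ [[eps [He [H1 H2]]] _]]]].
  exists eps. repeat split; auto.
  intros y Hy. destruct (H2 y Hy) as [z [Hz [Hg Hl]]]. exists z. repeat split; auto.
Qed.

Lemma f_fin t y z : (1 <= t <= T)%nat -> X (t - 1) y -> X t z ->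
  f t y z = Finite (fin (f t y z)).
Proof.
  intros Ht Hy Hz. destruct (H0_inflate t Ht) as [eps [He [H1 _]]].
  apply fin_eq; [apply H1; auto; apply inflate_self; auto; lra | apply f_notm; auto].
Qed.

Lemma Xset_nonempty t y : (1 <= t <= T)%nat -> X (t - 1) y -> exists z, XS t y z.
Proof.
  intros Ht Hy. destruct (H0_inflate t Ht) as [eps [He [_ H2]]].
  apply H2. apply inflate_self; auto; lra.
Qed.

Lemma Xset_X t y z : XS t y z -> X t z.
Proof. intros [H _]; auto. Qed.

Lemma trial_X t k : (t <= T)%nat -> (1 <= k)%nat -> X t (x t k).
Proof.
  intros Ht Hk. destruct t as [|t].
  - rewrite Hfwd0 by auto. apply HX0. reflexivity.
  - apply (Xset_X (S t) (x (S t - 1)%nat k)). apply (Hfwd (S t) k); auto; lia.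
Qed.

Lemma uQ_le_Q_of_Qk_le t k : (1 <= t <= T)%nat -> (1 <= k)%nat ->
  (forall z, X t z -> Rbar_le (Qk (t + 1)%nat k z) (Q (t + 1)%nat z)) ->
  forall y, Rbar_le (uQ t k y) (Q t y).
Proof.
  intros Ht Hk Hz y. apply (inf_glb _ _ _ (HQ t y Ht)). intros w [z [Hxz ->]].
  eapply Rbar_le_trans.
  - apply (inf_lb _ _ _ (HuQ t k y Ht Hk)). exists z. split; eauto.
  - apply Rbar_plus_le_compat_l. apply Hz. apply (Xset_X t y z Hxz).
Qed.

(* [fin] is harmless here: [uQ t k] is finite at the trial point, where it has a
   subgradient. *)
Definition cut t k y :=
  fin (uQ t k (x (t - 1)%nat k)) + vinner (beta t k) (vsub y (x (t - 1)%nat k)).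

Lemma cut_le_uQ t k : (2 <= t <= T)%nat -> (1 <= k)%nat ->
  uQ t k (x (t - 1)%nat k) = Finite (fin (uQ t k (x (t - 1)%nat k))) /\
  forall y, Rbar_le (Finite (cut t k y)) (uQ t k y).
Proof.
  intros Ht Hk. destruct (Hbwd t k Ht Hk) as [[r [Hr Hy]] _].
  unfold cut. rewrite Hr. simpl. split; auto.
Qed.

Lemma Qk_max_cut t k y : (2 <= t <= T)%nat -> (1 <= k)%nat -> X (t - 1)%nat y ->
  Qk t k y = Rbar_max (Qk t (k - 1)%nat y) (Finite (cut t k y)).
Proof.
  intros Ht Hk Hy. destruct (Hbwd t k Ht Hk) as [_ He]. rewrite He by auto.
  destruct (cut_le_uQ t k Ht Hk) as [Hr _]. rewrite Hr. reflexivity.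
Qed.

Lemma Qk_le_Q k t y : (2 <= t <= T + 1)%nat -> X (t - 1)%nat y -> Rbar_le (Qk t k y) (Q t y).
Proof.
  revert t y. induction k as [|k IHk].
  - intros t y Ht Hy. destruct (Nat.eq_dec t (T + 1)).
    + subst. rewrite HQk_T1, HQT1. apply Rbar_le_refl.
    + apply HQk0; auto; lia.
  - intros t y Ht. revert y. revert t Ht.
    apply (backward_induction
             (fun t => forall y, X (t - 1)%nat y -> Rbar_le (Qk t (S k) y) (Q t y))).
    + intros y _. rewrite HQk_T1, HQT1. apply Rbar_le_refl.
    + intros t Ht IHt y Hy. rewrite Qk_max_cut by (auto; lia). apply Rbar_max_lub.
      * replace (S k - 1)%nat with k by lia. apply IHk; auto; lia.
      * eapply Rbar_le_trans; [apply (cut_le_uQ t (S k)); lia|].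
        apply uQ_le_Q_of_Qk_le; try lia. intros z Hz. apply IHt.
        replace (t + 1 - 1)%nat with t by lia. auto.
Qed.

Lemma uQ_le_Q t k y : (1 <= t <= T)%nat -> (1 <= k)%nat -> Rbar_le (uQ t k y) (Q t y).
Proof.
  intros Ht Hk. apply uQ_le_Q_of_Qk_le; auto. intros z Hz. apply Qk_le_Q; [lia|].
  replace (t + 1 - 1)%nat with t by lia. auto.
Qed.

Lemma cut_le_Q t k y : (2 <= t <= T)%nat -> (1 <= k)%nat -> Rbar_le (Finite (cut t k y)) (Q t y).
Proof.
  intros Ht Hk. eapply Rbar_le_trans; [apply (cut_le_uQ t k Ht Hk)|]. apply uQ_le_Q; auto; lia.
Qed.

Lemma Qk_pred_le t k y : (2 <= t <= T + 1)%nat -> (1 <= k)%nat -> X (t - 1)%nat y ->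
  Rbar_le (Qk t (k - 1)%nat y) (Qk t k y).
Proof.
  intros Ht Hk Hy. destruct (Nat.eq_dec t (T + 1)).
  - subst. rewrite !HQk_T1. apply Rbar_le_refl.
  - rewrite (Qk_max_cut t k) by (auto; lia). apply Rbar_max_l.
Qed.

Lemma cut_le_Qk t j k y : (2 <= t <= T)%nat -> (1 <= j)%nat -> (j <= k)%nat -> X (t - 1)%nat y ->
  Rbar_le (Finite (cut t j y)) (Qk t k y).
Proof.
  intros Ht Hj Hjk Hy. induction Hjk.
  - rewrite Qk_max_cut by auto. apply Rbar_max_r.
  - eapply Rbar_le_trans; [apply IHHjk|]. replace m with (S m - 1)%nat at 1 by lia.
    apply Qk_pred_le; auto; lia.
Qed.

Lemma Q_notp t y : (1 <= t <= T + 1)%nat -> X (t - 1)%nat y -> Q t y <> p_infty.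
Proof.
  intros Ht. revert y. revert t Ht.
  apply (backward_induction (fun t => forall y, X (t - 1)%nat y -> Q t y <> p_infty)).
  - intros y _. rewrite HQT1. congruence.
  - intros t Ht IHt y Hy. destruct (Xset_nonempty t y ltac:(lia) Hy) as [z Hz].
    assert (HXz := Xset_X _ _ _ Hz).
    eapply Rbar_le_notp; [apply (inf_lb _ _ _ (HQ t y ltac:(lia))); exists z; split; eauto|].
    apply Rbar_plus_notp.
    + rewrite f_fin; auto; try lia. congruence.
    + apply IHt. replace (t + 1 - 1)%nat with t by lia. auto.
Qed.

Lemma Q_notp_near t : (1 <= t <= T)%nat -> exists eps, eps > 0 /\
  forall y, inflate (X (t - 1)%nat) eps y -> Q t y <> p_infty.
Proof.
  intros Ht. destruct (H0_inflate t Ht) as [eps [He [H1 H2]]]. exists eps. split; auto.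
  intros y Hy. destruct (H2 y Hy) as [z Hz]. assert (HXz := Xset_X _ _ _ Hz).
  eapply Rbar_le_notp; [apply (inf_lb _ _ _ (HQ t y Ht)); exists z; split; eauto|].
  apply Rbar_plus_notp; auto.
  apply Q_notp; try lia. replace (t + 1 - 1)%nat with t by lia. auto.
Qed.

Lemma Q_notm t y : (2 <= t <= T)%nat -> Q t y <> m_infty.
Proof. intros Ht. eapply Rbar_ge_notm; [apply (cut_le_Q t 1%nat); auto | congruence]. Qed.

Lemma Q_fin t y : (2 <= t <= T + 1)%nat -> X (t - 1)%nat y -> Q t y = Finite (fin (Q t y)).
Proof.
  intros Ht Hy. destruct (Nat.eq_dec t (T + 1)).
  - subst. rewrite HQT1. reflexivity.
  - apply fin_eq; [apply Q_notp; auto; lia | apply Q_notm; lia].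
Qed.

Lemma Qk_fin t k y : (2 <= t <= T + 1)%nat -> (1 <= k)%nat -> X (t - 1)%nat y ->
  Qk t k y = Finite (fin (Qk t k y)).
Proof.
  intros Ht Hk Hy. destruct (Nat.eq_dec t (T + 1)).
  - subst. rewrite HQk_T1. reflexivity.
  - apply fin_eq.
    + eapply Rbar_le_notp; [apply Qk_le_Q; auto|]. apply Q_notp; auto; lia.
    + eapply Rbar_ge_notm; [apply (cut_le_Qk t 1%nat k); auto; lia | congruence].
Qed.

Lemma lin_ok_comb t c y1 z1 y2 z2 : lin_ok n q A B b t y1 z1 -> lin_ok n q A B b t y2 z2 ->
  lin_ok n q A B b t (comb c y1 y2) (comb c z1 z2).
Proof.
  intros H1 H2 i Hi. specialize (H1 i Hi). specialize (H2 i Hi).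
  rewrite (rsum_ext _ _ (fun j => c * (A t i j * z1 j) + (1 - c) * (A t i j * z2 j)))
    by (intros j _; rewrite comb_i; ring).
  rewrite (rsum_ext _ (fun j => B t i j * comb c y1 y2 j)
             (fun j => c * (B t i j * y1 j) + (1 - c) * (B t i j * y2 j)))
    by (intros j _; rewrite comb_i; ring).
  rewrite !rsum_lin. replace (b t i) with (c * b t i + (1 - c) * b t i) by ring.
  rewrite <- H1 at 1. rewrite <- H2. ring.
Qed.

Lemma Xset_comb t c y1 z1 y2 z2 : (1 <= t <= T)%nat -> 0 < c < 1 ->
  XS t y1 z1 -> XS t y2 z2 -> XS t (comb c y1 y2) (comb c z1 z2).
Proof.
  intros Ht Hc [HX1 [L1 G1]] [HX2 [L2 G2]].
  destruct (HH0 t Ht) as [[_ [HXc _]] [_ [Hgc _]]].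
  split; [|split].
  - apply HXc; auto; lra.
  - apply lin_ok_comb; auto.
  - intros i Hi. destruct (Hgc i Hi) as [Hgi _].
    pose proof (Hgi (vpair y1 z1) (vpair y2 z2) c Hc) as HH.
    fold (comb c (vpair y1 z1) (vpair y2 z2)) in HH.
    rewrite comb_pair, !uncurry2_pair in HH. simpl in HH.
    specialize (G1 i Hi). specialize (G2 i Hi). nra.
Qed.

Lemma f_comb_le t c y1 z1 y2 z2 a1 a2 : (1 <= t <= T)%nat -> 0 < c < 1 ->
  f t y1 z1 = Finite a1 -> f t y2 z2 = Finite a2 ->
  Rbar_le (f t (comb c y1 y2) (comb c z1 z2)) (Finite (c * a1 + (1 - c) * a2)).
Proof.
  intros Ht Hc E1 E2. destruct (HH0 t Ht) as [_ [[_ [Hfc _]] _]].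
  pose proof (Hfc (vpair y1 z1) (vpair y2 z2) c Hc) as HF.
  fold (comb c (vpair y1 z1) (vpair y2 z2)) in HF.
  rewrite comb_pair, !uncurry2_pair, E1, E2 in HF. exact HF.
Qed.

Definition Q_convex_at t := forall y1 y2 a1 a2 c, 0 <= c <= 1 ->
  Q t y1 = Finite a1 -> Q t y2 = Finite a2 ->
  Rbar_le (Q t (comb c y1 y2)) (Finite (c * a1 + (1 - c) * a2)).

(* Given [eta]-optimal decisions [z1], [z2] at [y1], [y2], their combination is
   feasible at the combined state. *)
Lemma Q_convex_at_pred t : (1 <= t <= T)%nat -> Q_convex_at (t + 1) -> Q_convex_at t.
Proof.
  intros Ht IHt y1 y2 a1 a2 c Hc E1 E2.
  destruct (Req_dec c 0) as [->|Hc0]; [rewrite comb_0, E2; simpl; lra|].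
  destruct (Req_dec c 1) as [->|Hc1]; [rewrite comb_1, E1; simpl; lra|].
  assert (Hc' : 0 < c < 1) by lra.
  apply Rbar_le_eps. intros eta Heta.
  destruct (inf_approx _ _ eta (eq_ind _ _ (HQ t y1 Ht) _ E1) Heta) as [w1 [[z1 [Hz1 ->]] Hw1]].
  destruct (inf_approx _ _ eta (eq_ind _ _ (HQ t y2 Ht) _ E2) Heta) as [w2 [[z2 [Hz2 ->]] Hw2]].
  assert (Hnext : forall y z, XS t y z -> X (t + 1 - 1)%nat z).
  { intros y z Hz. replace (t + 1 - 1)%nat with t by lia. exact (Xset_X _ _ _ Hz). }
  rewrite (Q_fin (t + 1) z1 ltac:(lia) (Hnext _ _ Hz1)) in Hw1.
  rewrite (Q_fin (t + 1) z2 ltac:(lia) (Hnext _ _ Hz2)) in Hw2.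
  destruct (f t y1 z1) as [b1| |] eqn:Hf1; [|simpl in Hw1; tauto | now apply f_notm in Hf1].
  destruct (f t y2 z2) as [b2| |] eqn:Hf2; [|simpl in Hw2; tauto | now apply f_notm in Hf2].
  simpl in Hw1, Hw2.
  eapply Rbar_le_trans.
  { apply (inf_lb _ _ _ (HQ t _ Ht)). exists (comb c z1 z2).
    split; [apply Xset_comb; auto | reflexivity]. }
  eapply Rbar_le_trans.
  { apply Rbar_plus_le_fin; [apply (f_comb_le t c y1 z1 y2 z2 b1 b2); auto|].
    apply IHt; [lra | apply Q_fin; [lia | exact (Hnext _ _ Hz1)]
                    | apply Q_fin; [lia | exact (Hnext _ _ Hz2)]]. }
  simpl. nra.
Qed.

Lemma Q_convex t : (1 <= t <= T + 1)%nat -> Q_convex_at t.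
Proof.
  revert t. apply backward_induction; [|intros t Ht; apply Q_convex_at_pred; lia].
  intros y1 y2 a1 a2 c Hc E1 E2. rewrite HQT1 in *.
  injection E1; injection E2; intros; subst. simpl. lra.
Qed.

Lemma Q_cube_bound t : (2 <= t <= T)%nat -> exists h M, h > 0 /\
  forall y, X (t - 1)%nat y -> forall w, cube y h w ->
    Q t w = Finite (fin (Q t w)) /\ fin (Q t w) <= M.
Proof.
  intros Ht. destruct (Q_notp_near t ltac:(lia)) as [eps [He Hinf]].
  assert (Hn1 : 1 <= INR n) by (apply (le_INR 1); lia).
  set (h := eps / INR n).
  assert (Hh : h > 0) by (apply Rdiv_lt_0_compat; lra).
  assert (Hfin : forall y, X (t - 1)%nat y -> forall w, cube y h w -> Q t w = Finite (fin (Q t w))).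
  { intros y Hy w Hw. apply fin_eq; [|apply Q_notm; lia]. apply Hinf.
    exists y. split; auto. eapply Rle_trans.
    - apply vnorm_le_coords; auto. intros i Hi. rewrite vsub_i. apply Hw; auto.
    - right. unfold h. field. lra. }
  destruct (compact_uniform_cube_bound (X (t - 1)%nat) (fun w => fin (Q t w)) h) as [M HM];
    auto.
  - apply X_compact; lia.
  - intros y Hy. apply (convex_cube_bounded n _ y h Hh). intros w1 w2 c H1 H2 Hc.
    pose proof (Q_convex t ltac:(lia) w1 w2 _ _ c Hc (Hfin y Hy w1 H1) (Hfin y Hy w2 H2)) as HC.
    rewrite (Hfin y Hy _ (cube_comb y w1 w2 h c H1 H2 Hc)) in HC. exact HC.
  - exists (h / 2), M. split; [lra|]. intros y Hy w Hw. split; [|exact (HM y Hy w Hw)].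
    apply (Hfin y Hy). intros i Hi. specialize (Hw i Hi). lra.
Qed.

Lemma Q_lower_bound t : (2 <= t <= T)%nat ->
  exists mm, forall y, X (t - 1)%nat y -> mm <= fin (Q t y).
Proof.
  intros Ht. destruct (compact_bounded _ (X_compact (t - 1)%nat ltac:(lia))) as [R [HR HRy]].
  set (x1 := x (t - 1)%nat 1%nat).
  assert (Hx1 : X (t - 1)%nat x1) by (apply trial_X; lia).
  exists (fin (uQ t 1%nat x1) - rsum n (fun i => Rabs (beta t 1%nat i)) * (2 * R)).
  intros y Hy. pose proof (cut_le_Q t 1%nat y Ht (le_n _)) as H.
  rewrite (Q_fin t y) in H by (auto; lia). simpl in H. unfold cut in H. fold x1 in H.
  assert (Hb : Rabs (vinner (beta t 1%nat) (vsub y x1))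
               <= rsum n (fun i => Rabs (beta t 1%nat i)) * (2 * R)).
  { apply vinner_abs_le. intros i Hi. rewrite vsub_i. unfold Rminus.
    eapply Rle_trans; [apply Rabs_triang|]. rewrite Rabs_Ropp.
    pose proof (HRy y Hy i). pose proof (HRy x1 Hx1 i). lra. }
  apply Rabs_le_between in Hb. lra.
Qed.

Lemma Fbar_fin t k y z P a c : f t y z = Finite a -> Qk (t + 1)%nat (k - 1)%nat z = Finite c ->
  Fbar n f Qk lam t k y z P = Finite (a + c + lam t k * vnorm (vsub z P) ^ 2).
Proof. intros E1 E2. unfold Fbar. rewrite E1, E2. reflexivity. Qed.

Section Stage.
Variables (s k : nat) (D : R).
Hypothesis Hs : (1 <= s <= T)%nat.
(* With [k >= 2] the cuts [Qk (s + 1) (k - 1)] are finite, unlike the initial [Qk t 0]. *)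
Hypothesis Hk : (2 <= k)%nat.
Hypothesis HD : forall y z, X s y -> X s z -> vnorm (vsub y z) ^ 2 <= D.

Let y := x (s - 1)%nat k.
Let zs := x s k.

Lemma X_succ_pred z : X s z -> X (s + 1 - 1)%nat z.
Proof. replace (s + 1 - 1)%nat with s by lia. auto. Qed.

Definition fwd_value := fin (f s y zs) + fin (Qk (s + 1)%nat (k - 1)%nat zs).

Lemma fwd_f_fin : f s y zs = Finite (fin (f s y zs)).
Proof. apply f_fin; try apply trial_X; lia. Qed.

Lemma fwd_Qk_fin : Qk (s + 1)%nat (k - 1)%nat zs = Finite (fin (Qk (s + 1)%nat (k - 1)%nat zs)).
Proof. apply Qk_fin; try lia. apply X_succ_pred, trial_X; lia. Qed.

(* [X s] has diameter at most [sqrt D], so the proximal term costs at most [lam s k * D]. *)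
Lemma fwd_value_le z : XS s y z ->
  Rbar_le (Finite (fwd_value + lam s k * vnorm (vsub zs (xP s k)) ^ 2 - lam s k * D))
          (Rbar_plus (f s y z) (Qk (s + 1)%nat (k - 1)%nat z)).
Proof.
  intros Hz. assert (HXz := Xset_X _ _ _ Hz).
  destruct (Hfwd s k Hs ltac:(lia)) as [_ Hmin].
  pose proof (Hmin z Hz) as HM. fold y zs in HM.
  assert (Ef := f_fin s y z Hs ltac:(apply trial_X; lia) HXz).
  assert (Eq := Qk_fin (s + 1) (k - 1) z ltac:(lia) ltac:(lia) (X_succ_pred z HXz)).
  rewrite (Fbar_fin _ _ _ _ _ _ _ fwd_f_fin fwd_Qk_fin), (Fbar_fin _ _ _ _ _ _ _ Ef Eq) in HM.
  rewrite Ef, Eq. unfold fwd_value. simpl in HM |- *.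
  pose proof (HD z (xP s k) HXz (HxP s k Hs ltac:(lia))). pose proof (Hlam_nn s k).
  assert (lam s k * vnorm (vsub z (xP s k)) ^ 2 <= lam s k * D) by (apply Rmult_le_compat_l; auto).
  lra.
Qed.

Lemma Q_ge_fwd :
  Rbar_le (Finite (fwd_value + lam s k * vnorm (vsub zs (xP s k)) ^ 2 - lam s k * D)) (Q s y).
Proof.
  apply (inf_glb _ _ _ (HQ s y Hs)). intros w [z [Hz ->]].
  eapply Rbar_le_trans; [apply (fwd_value_le z Hz)|].
  apply Rbar_plus_le_compat_l, Qk_le_Q; [lia|]. apply X_succ_pred, (Xset_X _ _ _ Hz).
Qed.

Lemma uQ_ge_fwd : Rbar_le (Finite (fwd_value - lam s k * D)) (uQ s k y).
Proof.
  apply (inf_glb _ _ _ (HuQ s k y Hs ltac:(lia))). intros w [z [Hz ->]].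
  eapply Rbar_le_trans; [|eapply Rbar_le_trans; [apply (fwd_value_le z Hz)|]].
  - simpl. pose proof (Hlam_nn s k). pose proof (pow2_ge_0 (vnorm (vsub zs (xP s k)))). nra.
  - apply Rbar_plus_le_compat_l.
    apply Qk_pred_le; try lia. apply X_succ_pred, (Xset_X _ _ _ Hz).
Qed.

Lemma Q_le_fwd : Rbar_le (Q s y) (Finite (fin (f s y zs) + fin (Q (s + 1)%nat zs))).
Proof.
  replace (Finite (fin (f s y zs) + fin (Q (s + 1)%nat zs)))
    with (Rbar_plus (f s y zs) (Q (s + 1)%nat zs)).
  2:{ rewrite fwd_f_fin, (Q_fin (s + 1) zs); try lia; [reflexivity|].
      apply X_succ_pred, trial_X; lia. }
  apply (inf_lb _ _ _ (HQ s y Hs)). exists zs. split; auto.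
  apply (Hfwd s k Hs ltac:(lia)).
Qed.

Lemma stage_estimates :
  Q s y = Finite (fin (Q s y)) /\ uQ s k y = Finite (fin (uQ s k y)) /\
  fin (Q s y) <= fin (f s y zs) + fin (Q (s + 1)%nat zs) /\
  fwd_value + lam s k * vnorm (vsub zs (xP s k)) ^ 2 <= fin (Q s y) + lam s k * D /\
  fwd_value - lam s k * D <= fin (uQ s k y) <= fin (Q s y).
Proof.
  destruct (fin_between _ _ _ Q_ge_fwd Q_le_fwd) as [EQ [HQ1 HQ2]].
  assert (HuQ2 : Rbar_le (uQ s k y) (Finite (fin (Q s y)))) by (rewrite <- EQ; apply uQ_le_Q; lia).
  destruct (fin_between _ _ _ uQ_ge_fwd HuQ2) as [EuQ HuQ1].
  repeat split; auto; lra.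
Qed.

End Stage.

Lemma lam_limsup_nonpos s : (1 <= s <= T)%nat -> limsup_nonpos (lam s).
Proof.
  intros Hs eps He. destruct (Nat.eq_dec s T).
  - subst. exists 1%nat. intros k Hk. rewrite HlamT by auto. lra.
  - destruct (Hlam_lim s ltac:(lia) eps He) as [N HN]. exists N. intros k Hk.
    specialize (HN k Hk). unfold R_dist in HN. rewrite Rminus_0_r in HN.
    eapply Rle_lt_trans; [apply Rle_abs | exact HN].
Qed.

Lemma limsup_nonpos_up_to_lam s D u w : (1 <= s <= T)%nat -> 0 <= D -> limsup_nonpos u ->
  (forall k, (2 <= k)%nat -> w k <= u k + D * lam s k) -> limsup_nonpos w.
Proof.
  intros Hs HD Hu Hw. apply (limsup_nonpos_le 2 (fun k => u k + D * lam s k)); auto.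
  apply limsup_nonpos_plus; auto. apply limsup_nonpos_scal; auto. apply lam_limsup_nonpos; auto.
Qed.

Definition cut_gap t k :=
  fin (Q t (x (t - 1)%nat k)) - fin (Qk t (k - 1)%nat (x (t - 1)%nat k)).

Definition uQ_gap t k := fin (Q t (x (t - 1)%nat k)) - fin (uQ t k (x (t - 1)%nat k)).

Lemma cut_gap_succ s k :
  cut_gap (s + 1) k = fin (Q (s + 1)%nat (x s k)) - fin (Qk (s + 1)%nat (k - 1)%nat (x s k)).
Proof. unfold cut_gap. rewrite Nat.add_sub. reflexivity. Qed.

Lemma uQ_gap_vanishes_of_cut_gap s : (1 <= s <= T)%nat ->
  limsup_nonpos (cut_gap (s + 1)) -> limsup_nonpos (uQ_gap s).
Proof.
  intros Hs Hg. destruct (compact_sq_diameter _ (X_compact s Hs)) as [D [HD HDd]].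
  apply (limsup_nonpos_up_to_lam s D _ _ Hs HD Hg). intros k Hk.
  destruct (stage_estimates s k D Hs Hk HDd) as [_ [_ [H1 [_ [H2 _]]]]].
  unfold uQ_gap, fwd_value in *. rewrite cut_gap_succ. lra.
Qed.

Lemma cut_gap_vanishes_of_uQ_gap s : (2 <= s <= T)%nat ->
  limsup_nonpos (uQ_gap s) -> limsup_nonpos (cut_gap s).
Proof.
  intros Hs Ha.
  destruct (Q_cube_bound s Hs) as [h [M [Hh HM]]].
  destruct (Q_lower_bound s Hs) as [mm Hmm].
  assert (Hy : forall k, (1 <= k)%nat -> X (s - 1)%nat (x (s - 1)%nat k))
    by (intros; apply trial_X; lia).
  apply (lagged_cut_gap_vanishes (X (s - 1)%nat) (fun w => fin (Q s w)) (fun k => x (s - 1)%nat k)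
     (fun k => fin (uQ s k (x (s - 1)%nat k))) (beta s)
     (fun k => fin (Qk s (k - 1)%nat (x (s - 1)%nat k))) h M mm); auto.
  - apply X_compact; lia.
  - intros z Hz w Hw. apply (HM z Hz w Hw).
  - intros z Hz w c Hw Hc.
    destruct (HM z Hz w Hw) as [Ew _].
    pose proof (Q_convex s ltac:(lia) w z _ _ c Hc Ew (Q_fin s z ltac:(lia) Hz)) as HC.
    destruct (HM z Hz (comb c w z) (cube_comb z w z h c Hw (cube_center z h ltac:(lra)) Hc))
      as [Ec _].
    rewrite Ec in HC. exact HC.
  - intros j Hj w Hw. pose proof (cut_le_Q s j w Hs Hj) as HC.
    destruct (HM _ (Hy j Hj) w Hw) as [Ew _]. rewrite Ew in HC. exact HC.
  - intros k j Hj Hjk.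
    pose proof (cut_le_Qk s j (k - 1)%nat (x (s - 1)%nat k) Hs Hj ltac:(lia) (Hy k ltac:(lia)))
      as HC.
    rewrite (Qk_fin s (k - 1)%nat (x (s - 1)%nat k)) in HC by (try apply Hy; lia). exact HC.
Qed.

Lemma cut_gap_vanishes t : (2 <= t <= T + 1)%nat -> limsup_nonpos (cut_gap t).
Proof.
  revert t. apply backward_induction.
  - intros eps He. exists 0%nat. intros k _. unfold cut_gap. rewrite HQT1, HQk_T1. simpl. lra.
  - intros t Ht IHt. apply cut_gap_vanishes_of_uQ_gap; [lia|].
    apply uQ_gap_vanishes_of_cut_gap; [lia | exact IHt].
Qed.

Lemma uQ_gap_vanishes s : (1 <= s <= T)%nat -> limsup_nonpos (uQ_gap s).
Proof. intros Hs. apply uQ_gap_vanishes_of_cut_gap; auto. apply cut_gap_vanishes; lia. Qed.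

Local Notation cost := (cost_upto n x0 f).
Local Notation traj := (traj n x0).

Lemma traj_trial k t : (1 <= k)%nat -> traj (fun s => x s k) t = x t k.
Proof. intros Hk. destruct t; simpl; auto. rewrite Hfwd0; auto. Qed.

Lemma trial_feasible k : (1 <= k)%nat -> feasible n p q x0 X g A B b T (fun s => x s k).
Proof. intros Hk t Ht. rewrite !traj_trial by auto. apply Hfwd; auto. Qed.

Definition trial_cost k t := rsum t (fun s => fin (f (S s) (x s k) (x (S s) k))).

Lemma cost_trial k t : (1 <= k)%nat -> (t <= T)%nat ->
  cost (fun s => x s k) t = Finite (trial_cost k t).
Proof.
  intros Hk. induction t; intros Ht; [reflexivity|].
  simpl cost_upto. rewrite IHt by lia. rewrite !traj_trial by auto.
  rewrite (f_fin (S t) (x t k) (x (S t) k)); try lia; [reflexivity | |apply trial_X; lia].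
  replace (S t - 1)%nat with t by lia. apply trial_X; lia.
Qed.

Lemma Q1_le_cost w : feasible n p q x0 X g A B b T w -> Rbar_le (Q 1%nat x0) (cost w T).
Proof.
  intros Hw.
  assert (H : forall t, (t <= T)%nat ->
            Rbar_le (Q 1%nat x0) (Rbar_plus (cost w t) (Q (S t) (traj w t)))).
  { induction t; intros Ht.
    - simpl cost_upto. simpl traj. rewrite Rbar_plus_0_l. apply Rbar_le_refl.
    - eapply Rbar_le_trans; [apply IHt; lia|].
      simpl cost_upto. rewrite Rbar_plus_assoc. apply Rbar_plus_le_compat_l.
      apply (inf_lb _ _ _ (HQ (S t) (traj w t) ltac:(lia))). exists (traj w (S t)). split.
      + specialize (Hw (S t) ltac:(lia)). replace (S t - 1)%nat with t in Hw by lia. exact Hw.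
      + replace (S t + 1)%nat with (S (S t)) by lia. reflexivity. }
  specialize (H T (le_n T)). replace (S T) with (T + 1)%nat in H by lia.
  rewrite HQT1, Rbar_plus_0_r in H. exact H.
Qed.

Lemma Q1_fin : Q 1%nat x0 = Finite (fin (Q 1%nat x0)).
Proof.
  destruct (compact_sq_diameter _ (X_compact 1 ltac:(lia))) as [D [_ HD]].
  destruct (stage_estimates 1 2 D ltac:(lia) ltac:(lia) HD) as [E _].
  simpl in E. rewrite Hfwd0 in E by lia. exact E.
Qed.

Definition stage_excess s k :=
  fin (f s (x (s - 1)%nat k) (x s k)) + fin (Q (s + 1)%nat (x s k))
  - fin (Q s (x (s - 1)%nat k)).

Lemma stage_excess_vanishes s : (1 <= s <= T)%nat -> limsup_nonpos (stage_excess s).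
Proof.
  intros Hs. destruct (compact_sq_diameter _ (X_compact s Hs)) as [D [HD HDd]].
  apply (limsup_nonpos_up_to_lam s D _ _ Hs HD (cut_gap_vanishes (s + 1) ltac:(lia))).
  intros k Hk. destruct (stage_estimates s k D Hs Hk HDd) as [_ [_ [_ [H _]]]].
  rewrite cut_gap_succ. unfold stage_excess, fwd_value in *.
  pose proof (Hlam_nn s k). pose proof (pow2_ge_0 (vnorm (vsub (x s k) (xP s k)))).
  assert (0 <= lam s k * vnorm (vsub (x s k) (xP s k)) ^ 2) by (apply Rmult_le_pos; auto).
  lra.
Qed.

Lemma trial_cost_telescope k t : (1 <= k)%nat -> (t <= T)%nat ->
  trial_cost k t - fin (Q 1%nat x0) + fin (Q (t + 1)%nat (x t k))
  = rsum t (fun s => stage_excess (S s) k).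
Proof.
  intros Hk. induction t; intros Ht.
  - simpl. unfold trial_cost. simpl. rewrite Hfwd0 by lia. ring.
  - unfold trial_cost in *. simpl rsum. rewrite <- IHt by lia. unfold stage_excess.
    replace (S t - 1)%nat with t by lia. replace (S t + 1)%nat with (t + 1 + 1)%nat by lia.
    replace (S t) with (t + 1)%nat by lia. ring.
Qed.

Lemma trial_cost_excess k : (1 <= k)%nat ->
  trial_cost k T - fin (Q 1%nat x0) = rsum T (fun s => stage_excess (S s) k).
Proof.
  intros Hk. rewrite <- trial_cost_telescope by auto. rewrite HQT1. simpl. ring.
Qed.

Lemma trial_cost_excess_vanishes :
  limsup_nonpos (fun k => trial_cost k T - fin (Q 1%nat x0)).
Proof.
  assert (H : forall t, (t <= T)%nat ->
            limsup_nonpos (fun k => rsum t (fun s => stage_excess (S s) k))).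
  { induction t; intros Ht.
    - intros eps He. exists 0%nat. intros; simpl; lra.
    - apply limsup_nonpos_plus; [apply IHt; lia | apply stage_excess_vanishes; lia]. }
  apply (limsup_nonpos_le 1 _ _ (fun k Hk => Req_le _ _ (trial_cost_excess k Hk))), H; lia.
Qed.

Lemma optimal_value_Q1 : optimal_value n p q x0 X f g A B b T (Q 1%nat x0).
Proof.
  split.
  - intros w [z [Hz ->]]. apply Q1_le_cost; auto.
  - intros u Hu. rewrite Q1_fin.
    assert (Hk : forall k, (1 <= k)%nat -> Rbar_le u (Finite (trial_cost k T))).
    { intros k Hk. rewrite <- cost_trial by auto. apply Hu. exists (fun s => x s k).
      split; auto. apply trial_feasible; auto. }
    destruct u as [r| |]; simpl; auto.
    + apply Rnot_lt_le. intros Hlt.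
      destruct (trial_cost_excess_vanishes (r - fin (Q 1%nat x0))) as [N HN]; [lra|].
      specialize (HN (Nat.max N 1) ltac:(lia)). specialize (Hk (Nat.max N 1) ltac:(lia)).
      simpl in Hk. lra.
    + exact (Hk 1%nat (le_n _)).
Qed.

Lemma lin_ok_limit t y z :
  (forall e, e > 0 -> exists y' z', lin_ok n q A B b t y' z' /\ cube y e y' /\ cube z e z') ->
  lin_ok n q A B b t y z.
Proof.
  intros H i Hi.
  set (SA := rsum n (fun j => Rabs (A t i j)) + rsum n (fun j => Rabs (B t i j))).
  apply Rminus_diag_uniq, (Rabs_le_all_eps_0 _ SA).
  { pose proof (rsum_abs_nonneg n (A t i)). pose proof (rsum_abs_nonneg n (B t i)).
    unfold SA. lra. }
  intros e He. destruct (H e He) as [y' [z' [Hl [Hy Hz]]]].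
  rewrite <- (Hl i Hi).
  pose proof (rsum_mul_diff_le (A t i) z' z e Hz) as HA.
  pose proof (rsum_mul_diff_le (B t i) y' y e Hy) as HB.
  set (a := rsum n (fun j => A t i j * z' j) - rsum n (fun j => A t i j * z j)) in HA.
  set (c := rsum n (fun j => B t i j * y' j) - rsum n (fun j => B t i j * y j)) in HB.
  replace (_ - _) with (- (a + c)) by (unfold a, c; ring).
  rewrite Rabs_Ropp. eapply Rle_trans; [apply Rabs_triang|]. unfold SA. lra.
Qed.

Lemma g_ok_limit t y z : (1 <= t <= T)%nat ->
  (forall d, d > 0 -> exists y' z', g_ok n p g t y' z' /\
     vnorm (vsub (vpair y' z') (vpair y z)) < d) ->
  g_ok n p g t y z.
Proof.
  intros Ht H i Hi. apply Rnot_lt_le. intros Hpos.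
  destruct (HH0 t Ht) as [_ [_ [Hgc _]]]. destruct (Hgc i Hi) as [_ Hlsc].
  destruct (Hlsc (vpair y z) 0) as [d [Hd Hdd]].
  { rewrite uncurry2_pair. apply Rbar_lt_fin. exact Hpos. }
  destruct (H d Hd) as [y' [z' [Hg Hc]]].
  specialize (Hdd _ Hc). rewrite uncurry2_pair in Hdd. apply Rbar_lt_fin in Hdd.
  specialize (Hg i Hi). lra.
Qed.

Lemma cost_notm z t : (t <= T)%nat -> cost z t <> m_infty.
Proof.
  induction t; intros Ht; [simpl; congruence|].
  apply Rbar_plus_notm; [apply IHt; lia | apply f_notm; lia].
Qed.

Section Accumulation.
Variables (xs : nat -> vec n) (phi : nat -> nat).
Hypothesis Hphi : forall j, (phi j < phi (S j))%nat.
Hypothesis Hxs : forall t, (1 <= t <= T)%nat -> vconv (fun j => x t (phi j)) (xs t).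

Lemma traj_xs t : (1 <= t)%nat -> traj xs t = xs t.
Proof. destruct t; [lia | reflexivity]. Qed.

Lemma subseq_traj_conv t : (t <= T)%nat -> forall eps, eps > 0 -> exists N, forall j,
  (N <= j)%nat -> vnorm (vsub (x t (phi j)) (traj xs t)) < eps /\ (1 <= phi j)%nat.
Proof.
  intros Ht eps He. pose proof (strict_mono_ge phi Hphi) as Hge. destruct t.
  - exists 1%nat. intros j Hj. simpl. rewrite Hfwd0 by (specialize (Hge j); lia).
    rewrite vnorm_sub_diag. split; [lra|]. specialize (Hge j); lia.
  - destruct (Hxs (S t) ltac:(lia) eps He) as [N HN]. exists (Nat.max N 1). intros j Hj.
    split; [apply HN; lia|]. specialize (Hge j); lia.
Qed.

Lemma subseq_pair_conv t : (S t <= T)%nat -> forall d, d > 0 -> exists N, forall j, (N <= j)%nat ->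
  vnorm (vsub (vpair (x t (phi j)) (x (S t) (phi j))) (vpair (traj xs t) (traj xs (S t)))) < d
  /\ (1 <= phi j)%nat.
Proof.
  intros Ht d Hd.
  assert (Hnn : 1 <= INR (n + n)) by (apply (le_INR 1); lia).
  set (e := d / (2 * INR (n + n))).
  assert (He : e > 0) by (apply Rdiv_lt_0_compat; lra).
  destruct (subseq_traj_conv t ltac:(lia) e He) as [N1 H1].
  destruct (subseq_traj_conv (S t) Ht e He) as [N2 H2].
  exists (Nat.max N1 N2). intros j Hj.
  destruct (H1 j ltac:(lia)) as [A1 B1]. destruct (H2 j ltac:(lia)) as [A2 _].
  split; auto. eapply Rle_lt_trans; [apply vpair_close; [lia | left; exact A1 | left; exact A2]|].
  unfold e. replace (INR (n + n) * (d / (2 * INR (n + n)))) with (d / 2) by (field; lra). lra.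
Qed.

Lemma xs_feasible : feasible n p q x0 X g A B b T xs.
Proof.
  intros t Ht. pose proof (strict_mono_ge phi Hphi) as Hge. rewrite (traj_xs t) by lia.
  split; [|split].
  - apply (compact_seq_closed (X t) (fun j => x t (phi (S j)))).
    + apply X_compact; auto.
    + intros j. apply trial_X; [lia|]. specialize (Hge (S j)); lia.
    + intros eps He. destruct (Hxs t Ht eps He) as [N HN]. exists N. intros k Hk. apply HN. lia.
  - apply lin_ok_limit. intros e He.
    destruct (subseq_traj_conv (t - 1) ltac:(lia) e He) as [N1 H1].
    destruct (subseq_traj_conv t ltac:(lia) e He) as [N2 H2].
    set (j := Nat.max N1 N2). destruct (H1 j ltac:(lia)) as [A1 B1].
    destruct (H2 j ltac:(lia)) as [A2 _]. rewrite (traj_xs t) in A2 by lia.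
    exists (x (t - 1)%nat (phi j)), (x t (phi j)).
    split; [apply (Hfwd t (phi j) Ht B1)|]. split; apply vnorm_cube; lra.
  - apply g_ok_limit; auto. intros d Hd.
    destruct (subseq_pair_conv (t - 1) ltac:(lia) d Hd) as [N HN].
    destruct (HN N (le_n _)) as [HN1 HN2].
    replace (S (t - 1)) with t in HN1 by lia. rewrite (traj_xs t) in HN1 by lia.
    exists (x (t - 1)%nat (phi N)), (x t (phi N)). split; auto.
    apply (Hfwd t (phi N) Ht HN2).
Qed.

Lemma cost_lsc_subseq t : (t <= T)%nat -> forall c, Rbar_lt (Finite c) (cost xs t) ->
  exists N, forall j, (N <= j)%nat -> c < trial_cost (phi j) t.
Proof.
  induction t; intros Ht c Hc.
  - simpl in Hc. apply Rbar_lt_fin in Hc. exists 0%nat. intros. unfold trial_cost. simpl. lra.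
  - cbn [cost_upto] in Hc.
    destruct (Rbar_lt_plus_split c _ _ (cost_notm xs t ltac:(lia))
                (f_notm (S t) (traj xs t) (traj xs (S t)) ltac:(lia)) Hc)
      as [c1 [c2 [-> [H1 H2]]]].
    destruct (IHt ltac:(lia) c1 H1) as [N1 HN1].
    destruct (HH0 (S t) ltac:(lia)) as [_ [[_ [_ Hlsc]] _]].
    destruct (Hlsc (vpair (traj xs t) (traj xs (S t))) c2) as [d [Hd Hdd]];
      [rewrite uncurry2_pair; exact H2|].
    destruct (subseq_pair_conv t Ht d Hd) as [N2 HN2].
    exists (Nat.max N1 N2). intros j Hj. destruct (HN2 j ltac:(lia)) as [A1 B1].
    specialize (Hdd _ A1). rewrite uncurry2_pair in Hdd.
    rewrite (f_fin (S t) (x t (phi j)) (x (S t) (phi j))) in Hdd;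
      [| lia | replace (S t - 1)%nat with t by lia; apply trial_X; lia | apply trial_X; lia].
    apply Rbar_lt_fin in Hdd. specialize (HN1 j ltac:(lia)). unfold trial_cost in *. simpl. lra.
Qed.

Lemma xs_optimal : optimal_solution n p q x0 X f g A B b T xs.
Proof.
  split; [apply xs_feasible|]. intros w Hw.
  eapply Rbar_le_trans; [|apply Q1_le_cost; auto]. rewrite Q1_fin.
  apply NNPP. intros Hgt.
  assert (Heta : exists eta, eta > 0 /\
            Rbar_lt (Finite (fin (Q 1%nat x0) + eta)) (cost xs T)).
  { destruct (cost xs T) as [v| |]; simpl in Hgt.
    - exists ((v - fin (Q 1%nat x0)) / 2). split; [lra|]. apply Rbar_lt_fin. lra.
    - exists 1. split; [lra|]. split; [simpl; auto | congruence].
    - tauto. }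
  destruct Heta as [eta [He Hlt]].
  destruct (cost_lsc_subseq T (le_n _) _ Hlt) as [N1 HN1].
  destruct (trial_cost_excess_vanishes eta He) as [N2 HN2].
  pose proof (strict_mono_ge phi Hphi) as Hge.
  set (j := Nat.max N1 N2). specialize (HN1 j ltac:(lia)).
  specialize (HN2 (phi j) ltac:(specialize (Hge j); lia)). lra.
Qed.

End Accumulation.

Lemma Q_last_eq_uQ k y : (1 <= k)%nat -> Q T y = uQ T k y.
Proof.
  intros Hk. apply Rbar_le_antisym; [|apply uQ_le_Q; auto; lia].
  apply (inf_glb _ _ _ (HuQ T k y ltac:(lia) Hk)). intros w [z [Hz ->]].
  rewrite HQk_T1, <- (HQT1 z). apply (inf_lb _ _ _ (HQ T y ltac:(lia))). exists z; split; auto.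
Qed.

(* At its own trial point the newest cut equals [uQ t k]. *)
Lemma uQ_le_Qk_trial t k : (2 <= t <= T)%nat -> (1 <= k)%nat ->
  Rbar_le (uQ t k (x (t - 1)%nat k)) (Qk t k (x (t - 1)%nat k)).
Proof.
  intros Ht Hk. destruct (cut_le_uQ t k Ht Hk) as [Hr _]. rewrite Hr.
  pose proof (cut_le_Qk t k k (x (t - 1)%nat k) Ht Hk (le_n _) ltac:(apply trial_X; lia)) as H.
  unfold cut in H. rewrite vinner_sub_diag, Rplus_0_r in H. exact H.
Qed.

Lemma Q_last_eq_Qk k : (2 <= T)%nat -> (1 <= k)%nat ->
  Q T (x (T - 1)%nat k) = Qk T k (x (T - 1)%nat k).
Proof.
  intros HT2 Hk. apply Rbar_le_antisym.
  - rewrite (Q_last_eq_uQ k) by auto. apply uQ_le_Qk_trial; auto; lia.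
  - apply Qk_le_Q; [lia|]. apply trial_X; lia.
Qed.

Lemma uQ_gap_bound t k : (1 <= t <= T)%nat -> (2 <= k)%nat ->
  exists a c, Q t (x (t - 1)%nat k) = Finite a /\ uQ t k (x (t - 1)%nat k) = Finite c /\
    Rabs (a - c) <= uQ_gap t k.
Proof.
  intros Ht Hk. destruct (compact_sq_diameter _ (X_compact t Ht)) as [D [_ HD]].
  destruct (stage_estimates t k D Ht Hk HD) as [EQ [EuQ [_ [_ [_ Hle]]]]].
  do 2 eexists. split; [exact EQ|]. split; [exact EuQ|].
  unfold uQ_gap. rewrite Rabs_right by lra. lra.
Qed.

Lemma Q_Qk_diff_cv0 t : (2 <= t <= T)%nat ->
  Rbar_diff_cv0 (fun k => Q t (x (t - 1)%nat k)) (fun k => Qk t k (x (t - 1)%nat k)).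
Proof.
  intros Ht. apply (Rbar_diff_cv0_of_bound _ _ (uQ_gap t) 2); [|apply uQ_gap_vanishes; lia].
  intros k Hk. destruct (uQ_gap_bound t k ltac:(lia) Hk) as [a [c [EQ [EuQ _]]]].
  set (y := x (t - 1)%nat k) in *.
  assert (Hy : X (t - 1)%nat y) by (apply trial_X; lia).
  pose proof (Qk_le_Q k t y ltac:(lia) Hy) as H1.
  pose proof (uQ_le_Qk_trial t k Ht ltac:(lia)) as H2. fold y in H2.
  rewrite (Qk_fin t k y) in H1, H2 |- * by (auto; lia).
  rewrite EQ in H1 |- *. rewrite EuQ in H2. simpl in H1, H2.
  do 2 eexists. repeat split. unfold uQ_gap. fold y. rewrite EQ, EuQ. simpl.
  rewrite Rabs_right by lra. lra.
Qed.

Lemma Q_uQ_diff_cv0 t : (1 <= t <= T)%nat ->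
  Rbar_diff_cv0 (fun k => Q t (x (t - 1)%nat k)) (fun k => uQ t k (x (t - 1)%nat k)).
Proof.
  intros Ht. apply (Rbar_diff_cv0_of_bound _ _ (uQ_gap t) 2); [|apply uQ_gap_vanishes; auto].
  intros k Hk. apply uQ_gap_bound; auto.
Qed.

Lemma uQ1_cv : Rbar_cv (fun k => uQ 1%nat k x0) (Q 1%nat x0).
Proof.
  rewrite Q1_fin. apply (Rbar_cv_of_bound _ _ (uQ_gap 1) 2); [|apply uQ_gap_vanishes; lia].
  intros k Hk. destruct (uQ_gap_bound 1 k ltac:(lia) Hk) as [a [c [EQ [EuQ Hac]]]].
  simpl in EQ, EuQ. rewrite Hfwd0 in EQ, EuQ by lia.
  exists c. split; auto. rewrite EQ. simpl. rewrite <- Rabs_Ropp.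
  replace (- (c - a)) with (a - c) by ring. exact Hac.
Qed.

(* [Fbar 1] overestimates [Q 1 x0] by at most the proximal slack [lam 1 k * D] and
   underestimates it by at most the gap of the previous cuts of [Q 2]. *)
Lemma Fbar1_cv : Rbar_cv (fun k => Fbar n f Qk lam 1%nat k x0 (x 1%nat k) (xP 1%nat k)) (Q 1%nat x0).
Proof.
  destruct (compact_sq_diameter _ (X_compact 1 ltac:(lia))) as [D [HD HDd]].
  rewrite Q1_fin.
  apply (Rbar_cv_of_bound _ _ (fun k => cut_gap 2 k + D * lam 1%nat k) 2).
  - intros k Hk.
    destruct (stage_estimates 1 k D ltac:(lia) Hk HDd) as [_ [_ [H1 [H2 _]]]].
    pose proof (Qk_le_Q (k - 1) 2 (x 1%nat k) ltac:(lia) ltac:(apply trial_X; lia)) as H3.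
    rewrite (Q_fin 2 (x 1%nat k)), (Qk_fin 2 (k - 1) (x 1%nat k)) in H3
      by (try apply trial_X; lia). simpl in H3.
    pose proof (fwd_f_fin 1 k ltac:(lia) ltac:(lia)) as Ef.
    pose proof (fwd_Qk_fin 1 k ltac:(lia) ltac:(lia)) as Eq.
    unfold fwd_value, cut_gap in *.
    change (1 - 1)%nat with 0%nat in *. change (1 + 1)%nat with 2%nat in *.
    change (2 - 1)%nat with 1%nat in *. rewrite Hfwd0 in * by lia.
    rewrite (Fbar_fin _ _ _ _ _ _ _ Ef Eq). eexists; split; [reflexivity|].
    set (prox := lam 1%nat k * vnorm (vsub (x 1%nat k) (xP 1%nat k)) ^ 2) in *.
    assert (0 <= prox) by (apply Rmult_le_pos; auto; apply pow2_ge_0).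
    assert (0 <= D * lam 1%nat k) by (apply Rmult_le_pos; auto).
    apply Rabs_le. split; lra.
  - apply limsup_nonpos_plus; [apply cut_gap_vanishes; lia|].
    apply limsup_nonpos_scal; auto. apply lam_limsup_nonpos; lia.
Qed.

End REDDP.

Theorem mainTheorem3
  (n p q T : nat) (Hn : (1 <= n)%nat) (Hp : (1 <= p)%nat) (Hq : (1 <= q)%nat)
  (HT : (1 <= T)%nat)
  (x0 : vec n) (X : nat -> vec n -> Prop) (f : nat -> vec n -> vec n -> Rbar)
  (g : nat -> nat -> vec n -> vec n -> R) (A B : nat -> nat -> nat -> R)
  (b : nat -> vec q)
  (HX0 : forall y, X 0%nat y <-> y = x0)
  (HH0 : H0 n p q X f g A B b T)
  (Q : nat -> vec n -> Rbar)
  (HQT1 : forall y, Q (T + 1)%nat y = Finite 0)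
  (HQ : forall t y, (1 <= t <= T)%nat ->
     Rbar_is_inf (fun v => exists x, Xset n p q X g A B b t y x /\
                                     v = Rbar_plus (f t y x) (Q (t + 1)%nat x))
                 (Q t y))
  (lam : nat -> nat -> R) (xP : nat -> nat -> vec n)
  (Hlam_nn : forall t k, 0 <= lam t k)
  (Hlam1 : forall t, lam t 1%nat = 0)
  (HlamT : forall k, (1 <= k)%nat -> lam T k = 0)
  (Hlam_lim : forall t, (1 <= t <= T - 1)%nat -> Un_cv (fun k => lam t k) 0)
  (HxP : forall t k, (1 <= t <= T)%nat -> (1 <= k)%nat -> X t (xP t k))
  (x : nat -> nat -> vec n) (Qk : nat -> nat -> vec n -> Rbar)
  (uQ : nat -> nat -> vec n -> Rbar) (beta : nat -> nat -> vec n)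
  (HQk_T1 : forall k y, Qk (T + 1)%nat k y = Finite 0)
  (HQk0 : forall t y, (2 <= t <= T)%nat -> X (t - 1)%nat y ->
     Rbar_le (Qk t 0%nat y) (Q t y) /\ Qk t 0%nat y <> p_infty)
  (Hfwd0 : forall k, (1 <= k)%nat -> x 0%nat k = x0)
  (Hfwd : forall t k, (1 <= t <= T)%nat -> (1 <= k)%nat ->
     Xset n p q X g A B b t (x (t - 1)%nat k) (x t k) /\
     forall z, Xset n p q X g A B b t (x (t - 1)%nat k) z ->
       Rbar_le (Fbar n f Qk lam t k (x (t - 1)%nat k) (x t k) (xP t k))
               (Fbar n f Qk lam t k (x (t - 1)%nat k) z (xP t k)))
  (HuQ : forall t k y, (1 <= t <= T)%nat -> (1 <= k)%nat ->
     Rbar_is_inf (fun v => exists z, Xset n p q X g A B b t y z /\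
                                     v = Rbar_plus (f t y z) (Qk (t + 1)%nat k z))
                 (uQ t k y))
  (Hbwd : forall t k, (2 <= t <= T)%nat -> (1 <= k)%nat ->
     subgrad (uQ t k) (x (t - 1)%nat k) (beta t k) /\
     forall y, X (t - 1)%nat y ->
       Qk t k y = Rbar_max (Qk t (k - 1)%nat y)
                    (Rbar_plus (uQ t k (x (t - 1)%nat k))
                       (Finite (vinner (beta t k) (vsub y (x (t - 1)%nat k))))))
  :
  (forall k, (1 <= k)%nat -> Q (T + 1)%nat (x T k) = Qk (T + 1)%nat k (x T k)) /\
  (forall k, (1 <= k)%nat ->
     Q T (x (T - 1)%nat k) = uQ T k (x (T - 1)%nat k) /\
     ((2 <= T)%nat -> Q T (x (T - 1)%nat k) = Qk T k (x (T - 1)%nat k))) /\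
  (forall t, (2 <= t <= T - 1)%nat ->
     Rbar_diff_cv0 (fun k => Q t (x (t - 1)%nat k)) (fun k => Qk t k (x (t - 1)%nat k)) /\
     Rbar_diff_cv0 (fun k => Q t (x (t - 1)%nat k)) (fun k => uQ t k (x (t - 1)%nat k))) /\
  (Rbar_cv (fun k => uQ 1%nat k x0) (Q 1%nat x0) /\
   Rbar_cv (fun k => Fbar n f Qk lam 1%nat k x0 (x 1%nat k) (xP 1%nat k)) (Q 1%nat x0) /\
   optimal_value n p q x0 X f g A B b T (Q 1%nat x0)) /\
  (forall (xs : nat -> vec n) (phi : nat -> nat),
     (forall j, (phi j < phi (S j))%nat) ->
     (forall t, (1 <= t <= T)%nat -> vconv (fun j => x t (phi j)) (xs t)) ->
     optimal_solution n p q x0 X f g A B b T xs).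
Proof.
  intros. split; [|split; [|split; [|split]]].
  - intros k _. rewrite HQT1, HQk_T1. reflexivity.
  - intros k Hk. split; [eapply Q_last_eq_uQ | intros HT2; eapply Q_last_eq_Qk]; eauto.
  - intros t Ht. split; [eapply Q_Qk_diff_cv0 | eapply Q_uQ_diff_cv0]; eauto; lia.
  - split; [|split]; [eapply uQ1_cv | eapply Fbar1_cv | eapply optimal_value_Q1]; eauto.
  - intros xs phi Hphi Hxs. eapply xs_optimal; eauto.
Qed.
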